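(* Let $k\in\mathbb C$ with $\Re(k)<0$ and $\delta>0$. Let $f:\mathbb Q\to\mathbb C$ satisfy $f(x)=f(x+1)$ for $x\in\mathbb Q\setminus[-1,0]$, and let $h:\mathbb R\setminus\{0\}\to\mathbb C$ satisfy $h(x)=f(x)-|x|^{-k}f(-1/x)$ for $x\in\mathbb Q\cap([-1,1]\setminus\{0\})$, together with $$\sup_{\substack{x,y\in\mathbb R\setminus\{0\}\\ |x-y|<e^{-\varepsilon^{\delta-1}},\ |x|>2\varepsilon}}|h(x)-h(y)|=o(1)\quad(\varepsilon\to0^+),\qquad h(x)=O\big(e^{|x|^{\delta-1}}\big)\ \ (x\in[-1,1]\setminus\{0\}).$$ Then $f$ has property $\mathscr S(1+\delta)$.
   Context: For $x\in\mathbb R$ write $x=[b_0(x);b_1(x),\dots]$; $r(x)$ is the length of the minimal expansion for rational $x$, $r(x)=\infty$ otherwise. $\mathfrak T(B):=\{x\colon b_j(x)\leq\max(B,j(\log j)^2)\ \forall 1\leq j\leq r(x)\}$. For $x\in\mathfrak T(B)$, $V(B,m,x):=\{x'\in\mathbb Q\cap\mathfrak T(B)\colon r(x')\geq m,\ b_j(x')=b_j(x)\ \forall j\leq m\}$. Property $\mathscr S(\lambda)$: $\sup_{x\in\mathfrak T(m^\lambda)}\sup_{x',x''\in V(m^\lambda,m,x)}|f(x')-f(x'')|\to0$ as $m\to\infty$. *)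

From Stdlib Require Import Reals QArith Qreals.
From Coquelicot Require Import Coquelicot.
Open Scope R_scope.

Definition is_rat (x : R) : Prop := exists q : Q, x = Q2R q.

(* real power with complex exponent: t^s := exp(s ln t), for t > 0 *)
Definition rpow_c (t : R) (s : C) : C :=
  (exp (Re s * ln t) * cos (Im s * ln t), exp (Re s * ln t) * sin (Im s * ln t)).

(* Continued fraction algorithm: cf_rem x n = Some x_n (the n-th complete
   quotient, x_0 = x, x_{n+1} = 1 / frac(x_n)), or None if the expansion
   terminated before step n. *)
Fixpoint cf_rem (x : R) (n : nat) : option R :=
  match n with
  | O => Some x
  | S n' =>
      match cf_rem x n' with
      | None => None
      | Some y => if Req_EM_T (frac_part y) 0 then None else Some (/ frac_part y)
      end
  end.

(* b_n(x) = floor(x_n); conventionally 0 when n > r(x) *)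
Definition cf_digit (x : R) (n : nat) : Z :=
  match cf_rem x n with
  | Some y => Int_part y
  | None => 0%Z
  end.

(* r(x) = n : the (minimal) expansion of x is [b_0; b_1, ..., b_n] *)
Definition cf_len (x : R) (n : nat) : Prop :=
  exists y, cf_rem x n = Some y /\ frac_part y = 0.

Definition inT (B : R) (x : R) : Prop :=
  forall j : nat, (1 <= j)%nat -> cf_rem x j <> None ->
    IZR (cf_digit x j) <= Rmax B (INR j * (ln (INR j)) ^ 2).

Definition inV (B : R) (m : nat) (x x' : R) : Prop :=
  is_rat x' /\ inT B x' /\ (exists n, (m <= n)%nat /\ cf_len x' n) /\
  (forall j : nat, (j <= m)%nat -> cf_digit x' j = cf_digit x j).

(* Property S(lambda) for f (only its values at rationals matter) *)
Definition propS (lam : R) (f : R -> C) : Prop :=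
  forall eta : R, 0 < eta -> exists M : nat, forall m : nat, (M <= m)%nat ->
    forall x x' x'' : R, inT (Rpower (INR m) lam) x ->
      inV (Rpower (INR m) lam) m x x' -> inV (Rpower (INR m) lam) m x x'' ->
      Cmod (Cminus (f x') (f x'')) <= eta.

(* Through the continued fraction of a rational x, periodicity of f and the functional
   equation turn into a linear recursion f(p_j) = h(p_j) + w_j f(p_(j+1)) along the points
   p_j = +-(-1)^j / x_j built from the complete quotients x_j of x, with weights of modulus
   |w_j| = x_j^(Re k) <= 1 and |w_j w_(j+1)| <= 2^(Re k) < 1 because x_j x_(j+1) >= 2.
   Unrolling about m/2 steps writes f(x) as a combination of values of h with geometrically
   decaying coefficients plus a geometrically small remainder.  Two rationals x', x'' of
   V(m^(1+delta), m, x) share their first m partial quotients, so the points p_j of both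
   expansions are within about 2^(-m/2) of each other and, the quotients being bounded by a
   power of m, so are the weights; the modulus of continuity of h then makes the paired values
   of h close, while the growth bound h(p_j) = O(exp(x_j^(1-delta))) is subexponential in j
   and is beaten by the geometric decay of the coefficients. *)

From Stdlib Require Import Reals QArith Qreals Lra Lia ZArith.
From Coquelicot Require Import Coquelicot.
Open Scope R_scope.

(** * Real-analytic estimates *)

Lemma exp_le_compat (x y : R) : x <= y -> exp x <= exp y.
Proof. intros [H | ->]; [left; apply exp_increasing |]; lra. Qed.

Lemma Rpower_pos (x y : R) : 0 < Rpower x y.
Proof. apply exp_pos. Qed.

Lemma Rpower_le_1 (t a : R) : 0 < t <= 1 -> 0 <= a -> Rpower t a <= 1.
Proof.
  intros Ht Ha. rewrite <- exp_0. apply exp_le_compat.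
  assert (ln t <= 0) by (rewrite <- ln_1; apply ln_le; lra).
  nra.
Qed.

Lemma Rpower_ge_1 (x a : R) : 1 <= x -> 0 <= a -> 1 <= Rpower x a.
Proof. intros. rewrite <- (Rpower_O x) by lra. apply Rle_Rpower; lra. Qed.

Lemma Rinv_in_01 (y : R) : 1 <= y -> 0 < / y <= 1.
Proof.
  intros. split; [apply Rinv_0_lt_compat; lra|].
  rewrite <- Rinv_1. apply Rinv_le_contravar; lra.
Qed.

Lemma Rabs_sub_le_of_derive_bound (g g' : R -> R) (a b B : R) :
  (forall c, Rmin a b <= c <= Rmax a b -> derivable_pt_lim g c (g' c)) ->
  (forall c, Rmin a b <= c <= Rmax a b -> Rabs (g' c) <= B) ->
  Rabs (g a - g b) <= B * Rabs (a - b).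
Proof.
  intros Hd HB.
  destruct (MVT_abs g g' b a) as [c [Hc Hcab]].
  { intros c Hc. apply Hd. rewrite Rmin_comm, Rmax_comm. exact Hc. }
  rewrite Hc. apply Rmult_le_compat_r; [apply Rabs_pos|].
  apply HB. rewrite Rmin_comm, Rmax_comm. exact Hcab.
Qed.

Lemma exp_lipschitz_nonpos (u1 u2 : R) : u1 <= 0 -> u2 <= 0 ->
  Rabs (exp u1 - exp u2) <= Rabs (u1 - u2).
Proof.
  intros H1 H2. rewrite <- (Rmult_1_l (Rabs (u1 - u2))).
  apply Rabs_sub_le_of_derive_bound with exp.
  - intros c _. apply derivable_pt_lim_exp.
  - intros c [_ Hc]. rewrite Rabs_pos_eq by (left; apply exp_pos).
    rewrite <- exp_0. apply exp_le_compat.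
    apply Rle_trans with (1 := Hc). apply Rmax_lub; lra.
Qed.

Lemma cos_lipschitz (a1 a2 : R) : Rabs (cos a1 - cos a2) <= Rabs (a1 - a2).
Proof.
  rewrite <- (Rmult_1_l (Rabs (a1 - a2))).
  apply Rabs_sub_le_of_derive_bound with (fun t => - sin t).
  - intros c _. apply derivable_pt_lim_cos.
  - intros c _. rewrite Rabs_Ropp. apply Rabs_le, SIN_bound.
Qed.

Lemma sin_lipschitz (a1 a2 : R) : Rabs (sin a1 - sin a2) <= Rabs (a1 - a2).
Proof.
  rewrite <- (Rmult_1_l (Rabs (a1 - a2))).
  apply Rabs_sub_le_of_derive_bound with cos.
  - intros c _. apply derivable_pt_lim_sin.
  - intros c _. apply Rabs_le, COS_bound.
Qed.

Lemma ln_lipschitz (lam t1 t2 : R) : 0 < lam -> lam <= t1 -> lam <= t2 ->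
  Rabs (ln t1 - ln t2) <= Rabs (t1 - t2) / lam.
Proof.
  intros Hl H1 H2. unfold Rdiv. rewrite Rmult_comm.
  assert (Hmin : lam <= Rmin t1 t2) by (apply Rmin_glb; lra).
  apply Rabs_sub_le_of_derive_bound with Rinv.
  - intros c Hc. apply derivable_pt_lim_ln. lra.
  - intros c Hc. rewrite Rabs_pos_eq by (left; apply Rinv_0_lt_compat; lra).
    apply Rinv_le_contravar; lra.
Qed.

Lemma Cmod_le_Rabs_add (u v : R) : Cmod (u, v) <= Rabs u + Rabs v.
Proof.
  unfold Cmod. simpl. rewrite !Rmult_1_r.
  pose proof (Rabs_pos u). pose proof (Rabs_pos v).
  apply Rsqr_incr_0_var; [| lra].
  rewrite Rsqr_sqrt by nra. unfold Rsqr.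
  assert (u * u = Rabs u * Rabs u) by (rewrite <- Rabs_mult, Rabs_pos_eq; nra).
  assert (v * v = Rabs v * Rabs v) by (rewrite <- Rabs_mult, Rabs_pos_eq; nra).
  nra.
Qed.

Lemma Cmod_rpow_c (t : R) (s : C) : Cmod (rpow_c t s) = Rpower t (Re s).
Proof.
  unfold rpow_c, Cmod, Rpower. simpl.
  set (e := exp (Re s * ln t)). set (a := Im s * ln t).
  replace (e * cos a * (e * cos a * 1) + e * sin a * (e * sin a * 1))
    with (Rsqr e * (Rsqr (sin a) + Rsqr (cos a))) by (unfold Rsqr; ring).
  rewrite sin2_cos2, Rmult_1_r. apply sqrt_Rsqr. left; apply exp_pos.
Qed.

Lemma Cmod_sub_polar_le (u1 u2 a1 a2 : R) : u1 <= 0 -> u2 <= 0 ->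
  Cmod (Cminus (exp u1 * cos a1, exp u1 * sin a1) (exp u2 * cos a2, exp u2 * sin a2))
  <= 2 * (Rabs (u1 - u2) + Rabs (a1 - a2)).
Proof.
  intros H1 H2.
  pose proof (exp_lipschitz_nonpos u1 u2 H1 H2) as He.
  assert (He2 : 0 < exp u2 <= 1).
  { split; [apply exp_pos|]. rewrite <- exp_0. apply exp_le_compat. lra. }
  assert (Hcomp : forall (t : R -> R), (forall a, Rabs (t a) <= 1) ->
            (forall a b, Rabs (t a - t b) <= Rabs (a - b)) ->
            Rabs (exp u1 * t a1 - exp u2 * t a2) <= Rabs (u1 - u2) + Rabs (a1 - a2)).
  { intros t Ht1 Htl.
    replace (exp u1 * t a1 - exp u2 * t a2)
      with ((exp u1 - exp u2) * t a1 + exp u2 * (t a1 - t a2)) by ring.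
    eapply Rle_trans; [apply Rabs_triang|]. rewrite !Rabs_mult.
    rewrite (Rabs_pos_eq (exp u2)) by lra.
    specialize (Ht1 a1). specialize (Htl a1 a2).
    pose proof (Rabs_pos (exp u1 - exp u2)). pose proof (Rabs_pos (t a1 - t a2)). nra. }
  unfold Cminus, Cplus, Copp. simpl.
  eapply Rle_trans; [apply Cmod_le_Rabs_add|].
  pose proof (Hcomp cos (fun a => Rabs_le _ _ (COS_bound a)) cos_lipschitz).
  pose proof (Hcomp sin (fun a => Rabs_le _ _ (SIN_bound a)) sin_lipschitz).
  unfold Rminus in *. lra.
Qed.

Lemma rpow_c_lipschitz (lam t1 t2 : R) (s : C) :
  0 < lam -> lam <= t1 <= 1 -> lam <= t2 <= 1 -> 0 <= Re s ->
  Cmod (Cminus (rpow_c t1 s) (rpow_c t2 s))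
  <= 2 * (Re s + Rabs (Im s)) * (Rabs (t1 - t2) / lam).
Proof.
  intros Hl H1 H2 Hs.
  pose proof (ln_lipschitz lam t1 t2 Hl (proj1 H1) (proj1 H2)) as Hln.
  assert (Hln1 : ln t1 <= 0) by (rewrite <- ln_1; apply ln_le; lra).
  assert (Hln2 : ln t2 <= 0) by (rewrite <- ln_1; apply ln_le; lra).
  unfold rpow_c. eapply Rle_trans; [apply Cmod_sub_polar_le; nra|].
  rewrite <- !Rmult_minus_distr_l, !Rabs_mult, (Rabs_pos_eq (Re s)) by lra.
  pose proof (Rabs_pos (Im s)). pose proof (Rabs_pos (ln t1 - ln t2)). nra.
Qed.

Lemma rpow_c_inv_lipschitz (k : C) (a b Y : R) : Re k <= 0 -> 1 <= a <= Y -> 1 <= b <= Y ->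
  Cmod (Cminus (rpow_c (/ a) (Copp k)) (rpow_c (/ b) (Copp k)))
  <= 2 * (- Re k + Rabs (Im k)) * (Rabs (/ a - / b) * Y).
Proof.
  intros Hk Ha Hb.
  pose proof (Rinv_in_01 a (proj1 Ha)). pose proof (Rinv_in_01 b (proj1 Hb)).
  assert (HY : 0 < / Y) by (apply Rinv_0_lt_compat; lra).
  eapply Rle_trans.
  - assert (/ Y <= / a) by (apply Rinv_le_contravar; lra).
    assert (/ Y <= / b) by (apply Rinv_le_contravar; lra).
    assert (Re (Copp k) = - Re k) as ERe by reflexivity.
    apply (rpow_c_lipschitz (/ Y)); lra.
  - change (Re (Copp k)) with (- Re k). change (Im (Copp k)) with (- Im k).
    rewrite Rabs_Ropp. unfold Rdiv. rewrite Rinv_inv. lra.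
Qed.

(* rho is the decay rate of products of weights, mu the growth rate allowed for h along a
   chain. *)
Lemma decay_rates (k : C) : Re k < 0 -> exists rho mu : R,
  0 < rho < 1 /\ 1 < mu < 2 /\ rho * mu < 1 /\ Rpower (/ 2) (- Re k) <= rho ^ 2.
Proof.
  intros Hk.
  set (rho := Rmax (Rpower (/ 2) (- Re k / 2)) (/ 2)).
  assert (Hrho : / 2 <= rho < 1).
  { split; [apply Rmax_r|]. apply Rmax_lub_lt; [|lra].
    unfold Rpower. rewrite <- exp_0. apply exp_increasing.
    rewrite ln_Rinv by lra. pose proof ln_lt_2. nra. }
  assert (Hinv : 1 < / rho <= 2).
  { split; [rewrite <- Rinv_1; apply Rinv_lt_contravar; lra|].
    replace 2 with (/ / 2) by field. apply Rinv_le_contravar; lra. }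
  exists rho, ((1 + / rho) / 2). split; [lra|]. split; [lra|]. split.
  - replace (rho * ((1 + / rho) / 2)) with ((rho + 1) / 2) by (field; lra). lra.
  - replace (- Re k) with (- Re k / 2 + - Re k / 2) by field.
    rewrite Rpower_plus. simpl. rewrite Rmult_1_r.
    assert (Rpower (/ 2) (- Re k / 2) <= rho) by apply Rmax_l.
    pose proof (Rpower_pos (/ 2) (- Re k / 2)).
    apply Rmult_le_compat; lra.
Qed.

(** * Sublinear growth against exponential decay *)

Lemma exists_nat_ge (X : R) : exists N : nat, X <= INR N.
Proof. destruct (INR_archimed 1 X) as [n Hn]; [lra|]. exists n. lra. Qed.

Lemma ln_le_Rpower_div (x b : R) : 0 < x -> 0 < b -> ln x <= Rpower x b / b.
Proof.
  intros Hx Hb.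
  pose proof (exp_ineq1_le (ln (Rpower x b))) as H.
  rewrite exp_ln in H by apply Rpower_pos. rewrite ln_Rpower in H.
  apply Rmult_le_reg_l with b; [exact Hb|]. field_simplify; lra.
Qed.

Lemma Rpower_sublinear_eventually (g A eps : R) : 0 <= g < 1 -> 0 <= A -> 0 < eps ->
  exists X, 1 <= X /\ forall x, X <= x -> A * Rpower x g <= eps * x.
Proof.
  intros Hg HA He.
  assert (Hq : 0 <= A / eps) by (apply Rdiv_le_0_compat; lra).
  set (X := Rpower (A / eps + 1) (/ (1 - g))).
  assert (HX1 : 1 <= X) by (apply Rpower_ge_1; [lra | left; apply Rinv_0_lt_compat; lra]).
  exists X. split; [exact HX1|]. intros x Hx.
  assert (HXg : Rpower X (1 - g) = A / eps + 1).
  { unfold X. rewrite Rpower_mult, Rinv_l by lra. apply Rpower_1. lra. }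
  assert (Hxg : A / eps + 1 <= Rpower x (1 - g)).
  { rewrite <- HXg. apply Rle_Rpower_l; lra. }
  assert (Ex : x = Rpower x (1 - g) * Rpower x g).
  { rewrite <- Rpower_plus. replace (1 - g + g) with 1 by ring. rewrite Rpower_1; lra. }
  rewrite Ex at 2. pose proof (Rpower_pos x g).
  replace A with (eps * (A / eps)) at 1 by (field; lra).
  rewrite Rmult_assoc. apply Rmult_le_compat_l; [lra|].
  apply Rmult_le_compat_r; lra.
Qed.

Lemma Rpower_sublinear_bound (g A eps : R) : 0 <= g < 1 -> 0 <= A -> 0 < eps ->
  exists C, 0 <= C /\ forall x, 1 <= x -> A * Rpower x g <= eps * x + C.
Proof.
  intros Hg HA He.
  destruct (Rpower_sublinear_eventually g A eps Hg HA He) as [X [HX1 HX]].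
  pose proof (Rpower_pos X g).
  exists (A * Rpower X g). split; [nra|].
  intros x Hx. destruct (Rle_dec X x) as [HXx | HXx].
  - specialize (HX x HXx). nra.
  - assert (Rpower x g <= Rpower X g) by (apply Rle_Rpower_l; lra). nra.
Qed.

Lemma log_sublinear_minus_linear_eventually (g c p b T : R) :
  0 <= g < 1 -> 0 <= c -> 0 <= p -> 0 < b ->
  exists N : nat, forall m : nat, (N <= m)%nat ->
    p * ln (INR m) + c * Rpower (INR m) g - b * INR m <= T.
Proof.
  intros Hg Hc Hp Hb.
  destruct (Rpower_sublinear_eventually (/ 2) (2 * p) (b / 4)) as [X1 [HX1 HX1']]; try lra.
  destruct (Rpower_sublinear_eventually g c (b / 4)) as [X2 [HX2 HX2']]; try lra.
  destruct (exists_nat_ge (Rmax (Rmax X1 X2) (- 2 * T / b))) as [N HN].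
  exists N. intros m Hm.
  assert (HmN : INR N <= INR m) by (apply le_INR; exact Hm).
  pose proof (Rmax_l (Rmax X1 X2) (- 2 * T / b)). pose proof (Rmax_r (Rmax X1 X2) (- 2 * T / b)).
  pose proof (Rmax_l X1 X2). pose proof (Rmax_r X1 X2).
  set (x := INR m) in *.
  assert (Hln : ln x <= 2 * Rpower x (/ 2)).
  { replace (2 * Rpower x (/ 2)) with (Rpower x (/ 2) / / 2) by field.
    apply ln_le_Rpower_div; lra. }
  specialize (HX1' x ltac:(lra)). specialize (HX2' x ltac:(lra)).
  assert (p * ln x <= b / 4 * x) by nra.
  assert (- 2 * T <= b * x).
  { apply Rmult_le_reg_r with (/ b); [apply Rinv_0_lt_compat; lra|].
    replace (b * x * / b) with x by (field; lra). lra. }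
  lra.
Qed.

Lemma exp_sublinear_decay_eventually (D p c g b eta : R) :
  0 <= D -> 0 <= p -> 0 <= c -> 0 <= g < 1 -> 0 < b -> 0 < eta ->
  exists N : nat, forall m : nat, (N <= m)%nat ->
    D * exp (p * ln (INR m) + c * Rpower (INR m) g - b * INR m) <= eta.
Proof.
  intros HD Hp Hc Hg Hb He.
  destruct (log_sublinear_minus_linear_eventually g c p b (ln (eta / (D + 1))) Hg Hc Hp Hb)
    as [N HN].
  exists N. intros m Hm. specialize (HN m Hm).
  apply exp_le_compat in HN. rewrite exp_ln in HN by (apply Rdiv_lt_0_compat; lra).
  set (E := exp _) in *. pose proof (exp_pos (p * ln (INR m) + c * Rpower (INR m) g - b * INR m)).
  apply Rle_trans with ((D + 1) * E); [unfold E; nra|].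
  apply Rmult_le_reg_r with (/ (D + 1)); [apply Rinv_0_lt_compat; lra|].
  replace ((D + 1) * E * / (D + 1)) with E by (field; lra). exact HN.
Qed.

Definition theta (delta : R) : R := Rmax 0 (1 - delta).

Lemma theta_range (delta : R) : 0 < delta ->
  0 <= theta delta /\ 0 <= (1 + delta) * theta delta < 1.
Proof.
  intros Hd. unfold theta. destruct (Rle_dec 1 delta).
  - rewrite Rmax_left by lra. lra.
  - rewrite Rmax_right by lra. nra.
Qed.

Lemma Rpower_inv_le_theta (delta y : R) : 1 <= y ->
  Rpower (/ y) (delta - 1) <= Rpower y (theta delta).
Proof.
  intros Hy. unfold Rpower at 1. rewrite ln_Rinv by lra.
  replace ((delta - 1) * - ln y) with ((1 - delta) * ln y) by ring.
  apply Rle_Rpower; [exact Hy | apply Rmax_r].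
Qed.

Lemma quotient_power_bound (A delta c C1 x t y : R) :
  0 < delta -> 1 <= A -> 0 <= c -> 0 <= C1 -> 1 <= x -> 0 <= t ->
  (forall u, 1 <= u ->
     Rpower A (theta delta) * Rpower 2 ((1 + delta) * theta delta)
       * Rpower u ((1 + delta) * theta delta) <= c * u + C1) ->
  1 <= y -> y <= A * Rpower (x + t) (1 + delta) ->
  Rpower y (theta delta) <= Rpower A (theta delta) * Rpower 2 ((1 + delta) * theta delta)
    * Rpower x ((1 + delta) * theta delta) + c * t + C1.
Proof.
  intros Hd HA Hc HC1 Hx Ht Hgrowth Hy1 Hy.
  destruct (theta_range delta Hd) as [Hth Hg].
  set (g := (1 + delta) * theta delta) in *. set (Ath := Rpower A (theta delta) * Rpower 2 g).
  assert (HAth : 0 < Ath) by (apply Rmult_lt_0_compat; apply Rpower_pos).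
  assert (Hyx : Rpower y (theta delta) <= Rpower A (theta delta) * Rpower (x + t) g).
  { eapply Rle_trans; [apply Rle_Rpower_l; [exact Hth | split; [lra | exact Hy]]|].
    rewrite <- Rpower_mult_distr, Rpower_mult by (try lra; apply Rpower_pos). apply Rle_refl. }
  assert (Hsplit : forall u, 1 <= u -> x + t <= 2 * u ->
            Rpower (x + t) g <= Rpower 2 g * Rpower u g).
  { intros u Hu Hxt. rewrite Rpower_mult_distr by lra. apply Rle_Rpower_l; lra. }
  pose proof (Rpower_pos A (theta delta)). pose proof (Rpower_pos x g).
  destruct (Rle_dec t x) as [Htx | Htx].
  - pose proof (Hsplit x Hx ltac:(lra)).
    assert (Rpower A (theta delta) * Rpower (x + t) g <= Ath * Rpower x g).
    { unfold Ath. rewrite Rmult_assoc. apply Rmult_le_compat_l; lra. }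
    assert (0 <= c * t) by nra. lra.
  - pose proof (Hsplit t ltac:(lra) ltac:(lra)).
    assert (Rpower A (theta delta) * Rpower (x + t) g <= Ath * Rpower t g).
    { unfold Ath. rewrite Rmult_assoc. apply Rmult_le_compat_l; lra. }
    specialize (Hgrowth t ltac:(lra)). pose proof (Rpower_pos t g).
    assert (0 <= Ath * Rpower x g) by (apply Rmult_le_pos; lra).
    fold Ath in Hgrowth. lra.
Qed.

Lemma INR_half_bounds (m : nat) : (4 <= m)%nat ->
  INR (m / 2) <= INR m / 2 /\ INR m / 2 - / 2 <= INR (m / 2) /\ (m / 2 <= m - 2)%nat.
Proof.
  intros Hm. pose proof (Nat.div_mod m 2 ltac:(lia)). pose proof (Nat.mod_upper_bound m 2 ltac:(lia)).
  assert (H1 : (2 * (m / 2) <= m)%nat) by lia. assert (H2 : (m <= 2 * (m / 2) + 1)%nat) by lia.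
  apply le_INR in H1. apply le_INR in H2. rewrite mult_INR in H1. rewrite plus_INR, mult_INR in H2.
  replace (INR 2) with 2 in H1, H2 by (simpl; lra). rewrite INR_1 in H2.
  repeat split; [lra | lra | lia].
Qed.

Lemma Rpower_add_le_double (m j : nat) (a : R) : 0 <= a -> (1 <= m)%nat -> (j <= m)%nat ->
  Rpower (INR (m + j)) a <= Rpower (2 * INR m) a.
Proof.
  intros Ha Hm Hj. apply Rle_Rpower_l; [exact Ha|].
  assert (1 <= INR m) by (apply (le_INR 1); exact Hm).
  assert (INR j <= INR m) by (apply le_INR; exact Hj).
  rewrite plus_INR. pose proof (pos_INR j). lra.
Qed.

Lemma modulus_scale_eventually (A delta eps0 : R) : 1 <= A -> 0 < delta -> 0 < eps0 ->
  exists N : nat, forall m : nat, (N <= m)%nat ->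
    let Y := A * Rpower (2 * INR m) (1 + delta) in
    / (4 * Y) < eps0 /\ 2 * ln 2 - ln 2 / 2 * INR m < - Rpower (/ (4 * Y)) (delta - 1).
Proof.
  intros HA Hd He.
  destruct (theta_range delta Hd) as [Hth Hg].
  set (g := (1 + delta) * theta delta) in *.
  set (c := Rpower (4 * A * Rpower 2 (1 + delta)) (theta delta)).
  assert (Hc : 0 <= c) by (left; apply Rpower_pos).
  assert (Hln2 : 0 < ln 2) by (pose proof ln_lt_2; lra).
  destruct (log_sublinear_minus_linear_eventually g c 0 (ln 2 / 2) (-1 - 2 * ln 2))
    as [N1 HN1]; try lra.
  destruct (exists_nat_ge (/ (8 * eps0) + 1)) as [N2 HN2].
  exists (Nat.max N1 N2). intros m Hm Y.
  specialize (HN1 m ltac:(lia)).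
  assert (Hm2 : INR N2 <= INR m) by (apply le_INR; lia).
  assert (Hinv : 0 < / (8 * eps0)) by (apply Rinv_0_lt_compat; lra).
  set (x := INR m) in *.
  assert (Hx : 1 <= x) by lra.
  assert (HYx : 2 * x <= Y).
  { unfold Y. assert (2 * x <= Rpower (2 * x) (1 + delta)).
    { rewrite <- (Rpower_1 (2 * x)) at 1 by lra. apply Rle_Rpower; lra. }
    nra. }
  split.
  - assert (/ (4 * Y) <= / (8 * x)) by (apply Rinv_le_contravar; lra).
    assert (/ (8 * x) < eps0).
    { apply Rmult_lt_reg_l with (8 * x); [lra|]. rewrite Rinv_r by lra.
      assert (8 * eps0 * / (8 * eps0) = 1) by (field; lra). nra. }
    lra.
  - assert (E4Y : 4 * Y = 4 * A * Rpower 2 (1 + delta) * Rpower x (1 + delta)).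
    { unfold Y. rewrite <- (Rpower_mult_distr 2 x) by lra. ring. }
    assert (Rpower (/ (4 * Y)) (delta - 1) <= c * Rpower x g).
    { eapply Rle_trans; [apply Rpower_inv_le_theta; lra|].
      rewrite E4Y, <- Rpower_mult_distr, Rpower_mult; [apply Rle_refl| |apply Rpower_pos].
      pose proof (Rpower_pos 2 (1 + delta)). nra. }
    rewrite Rmult_0_l, Rplus_0_l in HN1. lra.
Qed.

Lemma weight_term_le_exp (Lk A delta K' C1 Ath g mu x : R) (L : nat) :
  0 <= Lk -> 0 < A -> 0 < K' -> 1 < mu -> 1 <= x -> INR L <= x / 2 ->
  INR L * (INR L * (Lk * (exp (2 * ln 2 - ln 2 / 2 * x) * (A * Rpower (2 * x) (1 + delta))))
    * (K' * exp (Ath * Rpower x g + C1) * mu ^ L))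
  <= Lk * 4 * (A * Rpower 2 (1 + delta)) * (K' * exp C1)
     * exp ((3 + delta) * ln x + Ath * Rpower x g - (ln 2 - ln mu) / 2 * x).
Proof.
  intros HLk HA HK Hmu Hx HL.
  assert (Hlnmu : 0 < ln mu) by (rewrite <- ln_1; apply ln_increasing; lra).
  pose proof (pos_INR L).
  set (P := Lk * (exp (2 * ln 2 - ln 2 / 2 * x) * (A * Rpower (2 * x) (1 + delta)))
            * (K' * exp (Ath * Rpower x g + C1))).
  assert (HP : 0 <= P).
  { unfold P. pose proof (exp_pos (2 * ln 2 - ln 2 / 2 * x)).
    pose proof (Rpower_pos (2 * x) (1 + delta)). pose proof (exp_pos (Ath * Rpower x g + C1)).
    apply Rmult_le_pos; apply Rmult_le_pos; try apply Rmult_le_pos; nra. }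
  assert (Hmono : INR L * INR L * mu ^ L <= x * x * exp (x / 2 * ln mu)).
  { rewrite <- (Rpower_pow L mu) by lra. unfold Rpower.
    assert (exp (INR L * ln mu) <= exp (x / 2 * ln mu)) by (apply exp_le_compat; nra).
    pose proof (exp_pos (INR L * ln mu)).
    apply Rmult_le_compat; try nra. }
  replace (INR L * (INR L * (Lk * (exp (2 * ln 2 - ln 2 / 2 * x) * (A * Rpower (2 * x) (1 + delta))))
            * (K' * exp (Ath * Rpower x g + C1) * mu ^ L)))
    with (P * (INR L * INR L * mu ^ L)) by (unfold P; ring).
  eapply Rle_trans; [apply Rmult_le_compat_l; eassumption|]. right.
  unfold P. rewrite <- (Rpower_mult_distr 2 x) by lra. unfold Rpower at 2.
  assert (E4 : exp (2 * ln 2 - ln 2 / 2 * x) = 4 * exp (- (ln 2 / 2 * x))).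
  { replace (2 * ln 2 - ln 2 / 2 * x) with (ln 2 + ln 2 + - (ln 2 / 2 * x)) by ring.
    rewrite !exp_plus, exp_ln by lra. ring. }
  rewrite E4.
  replace ((3 + delta) * ln x + Ath * Rpower x g - (ln 2 - ln mu) / 2 * x)
    with (ln x + ln x + (1 + delta) * ln x + - (ln 2 / 2 * x) + Ath * Rpower x g + x / 2 * ln mu)
    by field.
  rewrite !exp_plus, exp_ln by lra. ring.
Qed.

Lemma weight_term_eventually_small (Lk A delta K' C1 Ath g mu eta : R) :
  0 <= Lk -> 0 < A -> 0 < delta -> 0 < K' -> 1 < mu < 2 -> 0 <= g < 1 -> 0 <= Ath -> 0 < eta ->
  exists N : nat, forall m : nat, (N <= m)%nat -> forall L : nat, INR L <= INR m / 2 ->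
    INR L * (INR L * (Lk * (exp (2 * ln 2 - ln 2 / 2 * INR m) * (A * Rpower (2 * INR m) (1 + delta))))
      * (K' * exp (Ath * Rpower (INR m) g + C1) * mu ^ L)) <= eta.
Proof.
  intros HLk HA Hd HK Hmu Hg HAth He.
  assert (ln mu < ln 2) by (apply ln_increasing; lra).
  set (D := Lk * 4 * (A * Rpower 2 (1 + delta)) * (K' * exp C1)).
  assert (HD : 0 <= D).
  { unfold D. pose proof (Rpower_pos 2 (1 + delta)). pose proof (exp_pos C1).
    apply Rmult_le_pos; [apply Rmult_le_pos|]; nra. }
  destruct (exp_sublinear_decay_eventually D (3 + delta) Ath g ((ln 2 - ln mu) / 2) eta)
    as [N HN]; try lra.
  exists (Nat.max N 1). intros m Hm L HL.
  eapply Rle_trans; [apply weight_term_le_exp; try lra; apply (le_INR 1); lia|].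
  apply HN. lia.
Qed.

Lemma tail_term_eventually_small (rho r K' C1 Ath g C0 eta : R) :
  0 < rho -> 0 < r < 1 -> 0 <= K' -> 0 <= C0 -> 0 <= g < 1 -> 0 <= Ath -> 0 < eta ->
  exists N : nat, forall m : nat, (N <= m)%nat -> forall L : nat, INR m / 2 - / 2 <= INR L ->
    2 * ((K' * exp (Ath * Rpower (INR m) g + C1) / rho / (1 - r) + C0 / rho) * r ^ L) <= eta.
Proof.
  intros Hrho Hr HK HC0 Hg HAth He.
  assert (Hlnr : ln r < 0) by (rewrite <- ln_1; apply ln_increasing; lra).
  set (b := - ln r / 2).
  set (a1 := 2 * (K' * exp C1 / rho / (1 - r)) * exp b).
  set (a2 := 2 * (C0 / rho) * exp b).
  assert (Ha1 : 0 <= a1).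
  { unfold a1. pose proof (exp_pos C1). pose proof (exp_pos b).
    assert (0 <= K' * exp C1 / rho / (1 - r)) by (repeat apply Rdiv_le_0_compat; nra). nra. }
  assert (Ha2 : 0 <= a2).
  { unfold a2. pose proof (exp_pos b). assert (0 <= C0 / rho) by (apply Rdiv_le_0_compat; lra). nra. }
  destruct (exp_sublinear_decay_eventually a1 0 Ath g b (eta / 2)) as [N1 HN1]; unfold b; try lra.
  destruct (exp_sublinear_decay_eventually a2 0 0 g b (eta / 2)) as [N2 HN2]; unfold b; try lra.
  exists (Nat.max N1 N2). intros m Hm L HL.
  specialize (HN1 m ltac:(lia)). specialize (HN2 m ltac:(lia)).
  set (x := INR m) in *.
  rewrite !Rmult_0_l, !Rplus_0_l in HN1, HN2.
  assert (HrL : r ^ L <= exp b * exp (- b * x)).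
  { rewrite <- (Rpower_pow L r) by lra. unfold Rpower. rewrite <- exp_plus.
    apply exp_le_compat. unfold b. nra. }
  assert (Hsplit : K' * exp (Ath * Rpower x g + C1) / rho / (1 - r)
                   = K' * exp C1 / rho / (1 - r) * exp (Ath * Rpower x g)).
  { rewrite exp_plus. field. lra. }
  rewrite Hsplit.
  assert (0 <= K' * exp C1 / rho / (1 - r) * exp (Ath * Rpower x g) + C0 / rho).
  { pose proof (exp_pos C1). pose proof (exp_pos (Ath * Rpower x g)).
    assert (0 <= K' * exp C1 / rho / (1 - r)) by (repeat apply Rdiv_le_0_compat; nra).
    assert (0 <= C0 / rho) by (apply Rdiv_le_0_compat; lra). nra. }
  apply Rle_trans with (2 * ((K' * exp C1 / rho / (1 - r) * exp (Ath * Rpower x g) + C0 / rho)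
                             * (exp b * exp (- b * x)))).
  { apply Rmult_le_compat_l; [lra|]. apply Rmult_le_compat_l; assumption. }
  replace (Ath * Rpower x g - b * x) with (Ath * Rpower x g + - b * x) in HN1 by ring.
  replace (0 * Rpower x g - b * x) with (- b * x) in HN2 by ring.
  rewrite exp_plus in HN1. unfold a1, a2 in *. lra.
Qed.

(** * Rational numbers and integer parts *)

Lemma is_rat_IZR (z : Z) : is_rat (IZR z).
Proof. exists (inject_Z z). unfold Q2R. simpl. field. Qed.

Lemma is_rat_INR (n : nat) : is_rat (INR n).
Proof. rewrite INR_IZR_INZ. apply is_rat_IZR. Qed.

Lemma is_rat_1 : is_rat 1.
Proof. exact (is_rat_IZR 1). Qed.

Lemma is_rat_plus (x y : R) : is_rat x -> is_rat y -> is_rat (x + y).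
Proof. intros [p ->] [q ->]. exists (p + q)%Q. now rewrite Q2R_plus. Qed.

Lemma is_rat_opp (x : R) : is_rat x -> is_rat (- x).
Proof. intros [p ->]. exists (- p)%Q. now rewrite Q2R_opp. Qed.

Lemma is_rat_minus (x y : R) : is_rat x -> is_rat y -> is_rat (x - y).
Proof. intros. apply is_rat_plus; [| apply is_rat_opp]; assumption. Qed.

Lemma is_rat_mult (x y : R) : is_rat x -> is_rat y -> is_rat (x * y).
Proof. intros [p ->] [q ->]. exists (p * q)%Q. now rewrite Q2R_mult. Qed.

Lemma is_rat_inv (x : R) : is_rat x -> is_rat (/ x).
Proof.
  intros [p ->]. exists (/ p)%Q. rewrite RMicromega.Q2R_inv_ext.
  destruct (Qeq_bool p 0) eqn:E; [| reflexivity].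
  apply Qeq_bool_eq in E. rewrite E. unfold Q2R. simpl. rewrite Rmult_0_l, Rinv_0. field.
Qed.

Lemma is_rat_frac_part (x : R) : is_rat x -> is_rat (frac_part x).
Proof. intros. apply is_rat_minus; [assumption | apply is_rat_IZR]. Qed.

Lemma frac_part_range (y : R) : 0 <= frac_part y < 1.
Proof. destruct (base_fp y). lra. Qed.

Lemma Int_part_ge_1 (y : R) : 1 <= y -> (1 <= Int_part y)%Z.
Proof.
  intros Hy. destruct (base_Int_part y) as [_ H].
  assert (0 < IZR (Int_part y)) by lra. apply lt_IZR in H0. lia.
Qed.

Lemma Int_part_ge_2 (y : R) : 1 <= y -> Int_part y <> 1%Z -> frac_part y <> 0 -> 2 < y.
Proof.
  intros Hy H1 Hf. pose proof (Int_part_ge_1 y Hy).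
  assert (H2 : 2 <= IZR (Int_part y)) by (apply IZR_le; lia).
  pose proof (Rplus_Int_part_frac_part y). pose proof (frac_part_range y). lra.
Qed.

Lemma Int_part_frac_part_add_IZR (y : R) (z : Z) :
  Int_part (y + IZR z) = (Int_part y + z)%Z /\ frac_part (y + IZR z) = frac_part y.
Proof.
  destruct (Int_part_frac_part_spec (y + IZR z) (Int_part y + z) (frac_part y)) as [H1 H2].
  - apply frac_part_range.
  - rewrite plus_IZR. pose proof (Rplus_Int_part_frac_part y). lra.
  - split; auto.
Qed.

Lemma Int_part_frac_part_ratio (y : R) : 2 < y ->
  Int_part (y / (y - 1)) = 1%Z /\ frac_part (y / (y - 1)) = / (y - 1).
Proof.
  intros Hy.
  destruct (Int_part_frac_part_spec (y / (y - 1)) 1 (/ (y - 1))) as [H1 H2].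
  - split; [left; apply Rinv_0_lt_compat; lra|].
    rewrite <- Rinv_1. apply Rinv_lt_contravar; lra.
  - simpl. field. lra.
  - split; symmetry; assumption.
Qed.

Lemma nat_part_decomp (y : R) : 1 <= y -> y = frac_part y + INR (Z.to_nat (Int_part y)).
Proof.
  intros Hy. pose proof (Int_part_ge_1 y Hy).
  rewrite INR_IZR_INZ, Znat.Z2Nat.id by lia. unfold frac_part. ring.
Qed.

Lemma integer_decomp (y : R) : 1 <= y -> frac_part y = 0 ->
  y = 1 + INR (Z.to_nat (Int_part y - 1)).
Proof.
  intros Hy Hf. pose proof (Int_part_ge_1 y Hy).
  rewrite INR_IZR_INZ, Znat.Z2Nat.id, minus_IZR by lia.
  pose proof (Rplus_Int_part_frac_part y). simpl. lra.
Qed.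

(** * Chains of complete quotients *)

(* The complete quotients y_0, ..., y_n of a rational number > 1, padded with
   y_(n+1) = 1, where the recursion along the expansion stops at f (-1) or f 1. *)
Definition cf_chain (y : nat -> R) (n : nat) : Prop :=
  (forall j, (j <= n)%nat -> is_rat (y j) /\ 1 < y j) /\
  (forall j, (j < n)%nat -> frac_part (y j) <> 0 /\ y (S j) = / frac_part (y j)) /\
  frac_part (y n) = 0 /\ y (S n) = 1.

Definition chain_point (e : nat) (y : nat -> R) (j : nat) : R := (-1) ^ (e + j) / y j.

Definition chain_weight (k : C) (y : nat -> R) (j : nat) : C := rpow_c (/ y j) (Copp k).

Lemma sign_cases (i : nat) : (-1) ^ i = 1 \/ (-1) ^ i = -1.
Proof. induction i as [|i [IH | IH]]; simpl; [left | right | left]; try rewrite IH; lra. Qed.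

Lemma is_rat_sign (i : nat) : is_rat ((-1) ^ i).
Proof. destruct (sign_cases i) as [-> | ->]; [apply is_rat_1 | apply is_rat_opp, is_rat_1]. Qed.

Lemma Rabs_chain_point (e : nat) (y : nat -> R) (j : nat) : 0 < y j ->
  Rabs (chain_point e y j) = / y j.
Proof.
  intros Hy. unfold chain_point, Rdiv.
  rewrite Rabs_mult, pow_1_abs, Rabs_pos_eq by (left; apply Rinv_0_lt_compat; lra). ring.
Qed.

Lemma Rabs_chain_point_sub (e : nat) (y1 y2 : nat -> R) (j : nat) :
  Rabs (chain_point e y1 j - chain_point e y2 j) = Rabs (/ y1 j - / y2 j).
Proof.
  unfold chain_point, Rdiv. rewrite <- Rmult_minus_distr_l, Rabs_mult, pow_1_abs. ring.
Qed.

Lemma chain_point_neq_0 (e : nat) (y : nat -> R) (j : nat) : 0 < y j -> chain_point e y j <> 0.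
Proof.
  intros Hy H. pose proof (Rabs_chain_point e y j Hy) as E. rewrite H, Rabs_R0 in E.
  pose proof (Rinv_0_lt_compat _ Hy). lra.
Qed.

Lemma chain_point_in_unit (e : nat) (y : nat -> R) (j : nat) : 1 <= y j ->
  -1 <= chain_point e y j <= 1.
Proof.
  intros Hy. pose proof (Rinv_in_01 _ Hy). apply Rabs_le_between.
  rewrite Rabs_chain_point by lra. lra.
Qed.

Lemma chain_ge_1 (y : nat -> R) (n j : nat) : cf_chain y n -> (j <= S n)%nat -> 1 <= y j.
Proof.
  intros [H1 [_ [_ H4]]] Hj. destruct (Nat.eq_dec j (S n)) as [-> | Hne].
  - rewrite H4. lra.
  - destruct (H1 j ltac:(lia)). lra.
Qed.

Lemma chain_consecutive_prod_ge_2 (y : nat -> R) (n j : nat) : cf_chain y n -> (j <= n)%nat ->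
  2 <= y j * y (S j).
Proof.
  intros Hc Hj. pose proof Hc as [H1 [H2 [H3 H4]]].
  destruct (H1 j Hj) as [_ Hy].
  pose proof (Int_part_ge_1 (y j) (Rlt_le _ _ Hy)) as HI.
  pose proof (Rplus_Int_part_frac_part (y j)) as Hd.
  destruct (Nat.eq_dec j n) as [-> | Hne].
  - rewrite H4, H3, Rplus_0_r in *.
    assert (Int_part (y n) <> 1%Z) by (intro E; rewrite E in Hd; simpl in Hd; lra).
    assert (2 <= IZR (Int_part (y n))) by (apply IZR_le; lia). lra.
  - destruct (H2 j ltac:(lia)) as [Hf Hs].
    pose proof (chain_ge_1 y n (S j) Hc ltac:(lia)).
    apply IZR_le in HI.
    assert (frac_part (y j) = / y (S j)) by (rewrite Hs, Rinv_inv; reflexivity).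
    assert (y j * y (S j) >= (1 + / y (S j)) * y (S j)) by (apply Rle_ge, Rmult_le_compat_r; lra).
    replace ((1 + / y (S j)) * y (S j)) with (y (S j) + 1) in * by (field; lra). lra.
Qed.

Lemma backward_doubling (e : nat -> R) (N0 : nat) : e N0 <= 1 ->
  (forall j, (j < N0)%nat -> e j <= e (S j)) ->
  (forall j, (S j < N0)%nat -> 4 * e j <= e (S (S j))) ->
  forall j, (j <= N0)%nat -> e j * 2 ^ (N0 - j) <= 2.
Proof.
  intros Htop Hone Htwo.
  assert (Hback : forall d, ((d <= N0)%nat -> e (N0 - d)%nat * 2 ^ d <= 2) /\
                            ((S d <= N0)%nat -> e (N0 - S d)%nat * 2 ^ S d <= 2)).
  { induction d as [|d [IH1 IH2]]; split; try exact IH2; intros Hd.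
    - rewrite Nat.sub_0_r. simpl. lra.
    - pose proof (Hone (N0 - 1)%nat ltac:(lia)).
      replace (S (N0 - 1)) with N0 in * by lia. simpl. lra.
    - specialize (IH1 ltac:(lia)).
      pose proof (Htwo (N0 - S (S d))%nat ltac:(lia)) as H4.
      replace (S (S (N0 - S (S d)))) with (N0 - d)%nat in H4 by lia.
      replace (2 ^ S (S d)) with (4 * 2 ^ d) by (simpl; ring).
      pose proof (pow_lt 2 d ltac:(lra)). nra. }
  intros j Hj. pose proof (proj1 (Hback (N0 - j)%nat) ltac:(lia)) as Hj'.
  replace (N0 - (N0 - j))%nat with j in Hj' by lia. exact Hj'.
Qed.

(* Sharing the integer part, the next inverse quotients are the fractional parts, whose
   distance is |y1_j - y2_j|. *)
Lemma chain_inv_dist_succ (y1 y2 : nat -> R) (n1 n2 j : nat) :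
  cf_chain y1 n1 -> cf_chain y2 n2 -> (j < n1)%nat -> (j < n2)%nat ->
  Int_part (y1 j) = Int_part (y2 j) ->
  Rabs (/ y1 (S j) - / y2 (S j)) = Rabs (/ y1 j - / y2 j) * (y1 j * y2 j).
Proof.
  intros Hc1 Hc2 Hj1 Hj2 HI.
  destruct (proj1 Hc1 j ltac:(lia)) as [_ Hy1]. destruct (proj1 Hc2 j ltac:(lia)) as [_ Hy2].
  destruct (proj1 (proj2 Hc1) j Hj1) as [_ ->]. destruct (proj1 (proj2 Hc2) j Hj2) as [_ ->].
  rewrite !Rinv_inv. unfold frac_part. rewrite HI.
  rewrite <- (Rabs_pos_eq (y1 j * y2 j)) by nra. rewrite <- Rabs_mult, <- Rabs_Ropp.
  f_equal. field. lra.
Qed.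

(* The distance never decreases and at least quadruples over two steps, as y_j y_(j+1) >= 2. *)
Lemma chain_inv_close (y1 y2 : nat -> R) (n1 n2 N0 : nat) :
  cf_chain y1 n1 -> cf_chain y2 n2 -> (N0 <= n1)%nat -> (N0 <= n2)%nat ->
  (forall j, (j < N0)%nat -> Int_part (y1 j) = Int_part (y2 j)) ->
  forall j, (j <= N0)%nat -> Rabs (/ y1 j - / y2 j) * 2 ^ (N0 - j) <= 2.
Proof.
  intros Hc1 Hc2 HN1 HN2 HI.
  assert (Hy : forall j, (j <= N0)%nat -> 1 < y1 j /\ 1 < y2 j).
  { intros j Hj. split; [apply (proj1 Hc1 j) | apply (proj1 Hc2 j)]; lia. }
  assert (Hstep : forall j, (j < N0)%nat ->
            Rabs (/ y1 (S j) - / y2 (S j)) = Rabs (/ y1 j - / y2 j) * (y1 j * y2 j)).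
  { intros j Hj. apply (chain_inv_dist_succ y1 y2 n1 n2); [assumption | assumption | lia | lia |].
    apply HI, Hj. }
  apply backward_doubling.
  - destruct (Hy N0 (le_n N0)) as [H1 H2].
    pose proof (Rinv_in_01 _ (Rlt_le _ _ H1)). pose proof (Rinv_in_01 _ (Rlt_le _ _ H2)).
    apply Rabs_le. lra.
  - intros j Hj. rewrite (Hstep j Hj).
    destruct (Hy j ltac:(lia)). pose proof (Rabs_pos (/ y1 j - / y2 j)).
    assert (1 <= y1 j * y2 j) by nra. nra.
  - intros j Hj. rewrite (Hstep (S j) Hj), (Hstep j ltac:(lia)).
    pose proof (chain_consecutive_prod_ge_2 y1 n1 j Hc1 ltac:(lia)).
    pose proof (chain_consecutive_prod_ge_2 y2 n2 j Hc2 ltac:(lia)).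
    pose proof (Rabs_pos (/ y1 j - / y2 j)).
    assert (4 <= (y1 j * y1 (S j)) * (y2 j * y2 (S j))) by nra.
    set (d := Rabs (/ y1 j - / y2 j)) in *.
    replace (d * (y1 j * y2 j) * (y1 (S j) * y2 (S j)))
      with (d * ((y1 j * y1 (S j)) * (y2 j * y2 (S j)))) by ring.
    nra.
Qed.

Lemma inv_quotients_close (y1 y2 : nat -> R) (n1 n2 N0 m : nat) :
  cf_chain y1 n1 -> cf_chain y2 n2 -> (N0 <= n1)%nat -> (N0 <= n2)%nat -> (m <= N0 + 2)%nat ->
  (forall j, (j < N0)%nat -> Int_part (y1 j) = Int_part (y2 j)) ->
  forall j, 2 * INR j + 2 <= INR m ->
    Rabs (/ y1 j - / y2 j) <= exp (2 * ln 2 - ln 2 / 2 * INR m).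
Proof.
  intros Hc1 Hc2 HN1 HN2 Hm HI j Hj.
  assert (HjN : (2 * j + 2 <= m)%nat).
  { apply INR_le. rewrite plus_INR, mult_INR. simpl. lra. }
  pose proof (chain_inv_close y1 y2 n1 n2 N0 Hc1 Hc2 HN1 HN2 HI j ltac:(lia)) as Hclose.
  rewrite <- (Rpower_pow _ 2) in Hclose by lra. unfold Rpower in Hclose.
  assert (Hd : INR m / 2 - 1 <= INR (N0 - j)).
  { rewrite minus_INR by lia. apply le_INR in Hm. rewrite plus_INR in Hm.
    replace (INR 2) with 2 in Hm by (simpl; lra). lra. }
  pose proof ln_lt_2.
  pose proof (exp_pos (INR (N0 - j) * ln 2)).
  assert (Rabs (/ y1 j - / y2 j) <= 2 * exp (- (INR (N0 - j) * ln 2))).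
  { rewrite exp_Ropp. apply Rmult_le_reg_r with (exp (INR (N0 - j) * ln 2)); [lra|].
    rewrite Rmult_assoc, Rinv_l by lra. lra. }
  eapply Rle_trans; [eassumption|].
  replace (2 * ln 2 - ln 2 / 2 * INR m) with (ln 2 + (ln 2 - ln 2 / 2 * INR m)) by ring.
  rewrite exp_plus, exp_ln by lra. apply Rmult_le_compat_l; [lra|].
  apply exp_le_compat. nra.
Qed.

Lemma Cmod_chain_weight (k : C) (y : nat -> R) (j : nat) :
  Cmod (chain_weight k y j) = Rpower (/ y j) (- Re k).
Proof. apply Cmod_rpow_c. Qed.

Lemma chain_weight_le_1 (k : C) (y : nat -> R) (n j : nat) : Re k <= 0 ->
  cf_chain y n -> (j <= S n)%nat -> Cmod (chain_weight k y j) <= 1.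
Proof.
  intros Hk Hc Hj. rewrite Cmod_chain_weight.
  apply Rpower_le_1; [apply Rinv_in_01, (chain_ge_1 y n j Hc Hj) | lra].
Qed.

Lemma chain_weight_pair (k : C) (y : nat -> R) (n j : nat) : Re k <= 0 ->
  cf_chain y n -> (j <= n)%nat ->
  Cmod (chain_weight k y j) * Cmod (chain_weight k y (S j)) <= Rpower (/ 2) (- Re k).
Proof.
  intros Hk Hc Hj. rewrite !Cmod_chain_weight.
  pose proof (chain_ge_1 y n j Hc ltac:(lia)). pose proof (chain_ge_1 y n (S j) Hc ltac:(lia)).
  pose proof (chain_consecutive_prod_ge_2 y n j Hc Hj).
  rewrite Rpower_mult_distr by (apply Rinv_0_lt_compat; lra).
  apply Rle_Rpower_l; [lra|]. split.
  - apply Rmult_lt_0_compat; apply Rinv_0_lt_compat; lra.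
  - rewrite <- Rinv_mult. apply Rinv_le_contravar; lra.
Qed.

Lemma chain_weights_close (k : C) (y1 y2 : nat -> R) (n1 n2 L : nat) (Y dist : R) :
  Re k <= 0 -> cf_chain y1 n1 -> cf_chain y2 n2 -> (L <= n1)%nat -> (L <= n2)%nat ->
  (forall j, (j < L)%nat -> y1 j <= Y /\ y2 j <= Y) ->
  (forall j, (j < L)%nat -> Rabs (/ y1 j - / y2 j) <= dist) ->
  forall l, (l < L)%nat ->
    Cmod (chain_weight k y1 l) <= 1 /\ Cmod (chain_weight k y2 l) <= 1 /\
    Cmod (Cminus (chain_weight k y1 l) (chain_weight k y2 l))
      <= 2 * (- Re k + Rabs (Im k)) * (dist * Y).
Proof.
  intros Hk Hc1 Hc2 HL1 HL2 HY Hdist l Hl.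
  pose proof (chain_ge_1 y1 n1 l Hc1 ltac:(lia)). pose proof (chain_ge_1 y2 n2 l Hc2 ltac:(lia)).
  destruct (HY l Hl).
  split; [apply (chain_weight_le_1 k y1 n1); [exact Hk | exact Hc1 | lia]|].
  split; [apply (chain_weight_le_1 k y2 n2); [exact Hk | exact Hc2 | lia]|].
  eapply Rle_trans; [apply (rpow_c_inv_lipschitz k (y1 l) (y2 l) Y); [exact Hk | lra | lra]|].
  pose proof (Rabs_pos (Im k)). pose proof (Rabs_pos (/ y1 l - / y2 l)).
  specialize (Hdist l Hl). apply Rmult_le_compat_l; [lra|].
  apply Rmult_le_compat_r; lra.
Qed.

Lemma h_chain_point_bound (h : R -> C) (K delta : R) (e : nat) (y : nat -> R) (j : nat) :
  (forall x, x <> 0 -> -1 <= x <= 1 -> Cmod (h x) <= K * exp (Rpower (Rabs x) (delta - 1))) ->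
  1 <= y j -> Cmod (h (chain_point e y j)) <= Rmax K 1 * exp (Rpower (y j) (theta delta)).
Proof.
  intros Hb Hy.
  eapply Rle_trans; [apply Hb; [apply chain_point_neq_0 | apply chain_point_in_unit]; lra|].
  rewrite Rabs_chain_point by lra.
  pose proof (exp_le_compat _ _ (Rpower_inv_le_theta delta (y j) Hy)).
  pose proof (exp_pos (Rpower (/ y j) (delta - 1))).
  pose proof (Rmax_l K 1). pose proof (Rmax_r K 1).
  apply Rle_trans with (Rmax K 1 * exp (Rpower (/ y j) (delta - 1)));
    [apply Rmult_le_compat_r | apply Rmult_le_compat_l]; lra.
Qed.

Lemma h_chain_point_geometric (h : R -> C) (K delta A mu C1 : R) (e : nat) (y : nat -> R)
    (n m : nat) :
  (forall x, x <> 0 -> -1 <= x <= 1 -> Cmod (h x) <= K * exp (Rpower (Rabs x) (delta - 1))) ->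
  0 < delta -> 1 <= A -> 1 < mu -> 0 <= C1 -> (1 <= m)%nat ->
  (forall u, 1 <= u ->
     Rpower A (theta delta) * Rpower 2 ((1 + delta) * theta delta)
       * Rpower u ((1 + delta) * theta delta) <= ln mu * u + C1) ->
  cf_chain y n -> (forall j, (j <= n)%nat -> y j <= A * Rpower (INR (m + j)) (1 + delta)) ->
  forall j, (j <= n)%nat ->
    Cmod (h (chain_point e y j))
    <= Rmax K 1 * exp (Rpower A (theta delta) * Rpower 2 ((1 + delta) * theta delta)
                         * Rpower (INR m) ((1 + delta) * theta delta) + C1) * mu ^ j.
Proof.
  intros Hb Hd HA Hmu HC1 Hm Hgrowth Hc Hy j Hj.
  pose proof (chain_ge_1 y n j Hc ltac:(lia)) as Hy1.
  eapply Rle_trans; [apply (h_chain_point_bound h K delta e y j Hb Hy1)|].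
  assert (Hlnmu : 0 < ln mu) by (rewrite <- ln_1; apply ln_increasing; lra).
  pose proof (quotient_power_bound A delta (ln mu) C1 (INR m) (INR j) (y j) Hd HA ltac:(lra) HC1
    ltac:(apply (le_INR 1); lia) (pos_INR j) Hgrowth Hy1 ltac:(rewrite <- plus_INR; apply Hy, Hj)).
  rewrite Rmult_assoc. apply Rmult_le_compat_l; [pose proof (Rmax_r K 1); lra|].
  replace (mu ^ j) with (exp (INR j * ln mu)) by (rewrite <- Rpower_pow by lra; reflexivity).
  rewrite <- exp_plus.
  apply exp_le_compat. lra.
Qed.

Lemma h_modulus_at_scale (h : R -> C) (delta eps0 eta1 Y dist : R) (e : nat) (y1 y2 : nat -> R)
    (j : nat) :
  (forall eps, 0 < eps < eps0 -> forall x y, x <> 0 -> y <> 0 ->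
     Rabs (x - y) < exp (- Rpower eps (delta - 1)) -> Rabs x > 2 * eps ->
     Cmod (Cminus (h x) (h y)) <= eta1) ->
  / (4 * Y) < eps0 -> dist < exp (- Rpower (/ (4 * Y)) (delta - 1)) ->
  1 < y1 j -> y1 j <= Y -> 1 < y2 j -> y2 j <= Y -> Rabs (/ y1 j - / y2 j) <= dist ->
  Cmod (Cminus (h (chain_point e y1 j)) (h (chain_point e y2 j))) <= eta1.
Proof.
  intros Hmod Heps Hdist Hy1 HY1 Hy2 HY2 Hclose.
  apply (Hmod (/ (4 * Y))).
  - split; [apply Rinv_0_lt_compat; lra | exact Heps].
  - apply chain_point_neq_0. lra.
  - apply chain_point_neq_0. lra.
  - rewrite Rabs_chain_point_sub. lra.
  - rewrite Rabs_chain_point by lra. apply Rlt_gt.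
    apply Rlt_le_trans with (/ Y); [|apply Rinv_le_contravar; lra].
    replace (2 * / (4 * Y)) with (/ Y * / 2) by (field; lra).
    pose proof (Rinv_0_lt_compat Y ltac:(lra)). lra.
Qed.

(** * Unrolling a linear recursion *)

Lemma backward_geometric (T : nat -> R) (n : nat) (a b r : R) :
  0 <= a -> 0 <= b -> 0 < r < 1 ->
  (forall j, (j <= n)%nat -> T j <= a * r ^ j + T (S j)) -> T (S n) <= b * r ^ S n ->
  forall j, (j <= n + 1)%nat -> T j <= (a / (1 - r) + b) * r ^ j.
Proof.
  intros Ha Hb Hr Hstep Hend.
  assert (Hc : a = (a / (1 - r) + b) * (1 - r) - b * (1 - r)) by (field; lra).
  assert (Hback : forall d, (d <= n + 1)%nat ->
            T (n + 1 - d)%nat <= (a / (1 - r) + b) * r ^ (n + 1 - d)).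
  { induction d as [|d IH]; intros Hd.
    - replace (n + 1 - 0)%nat with (S n) by lia.
      pose proof (pow_le r (S n) ltac:(lra)).
      assert (0 <= a / (1 - r)) by (apply Rdiv_le_0_compat; lra). nra.
    - set (j := (n + 1 - S d)%nat). replace (n + 1 - d)%nat with (S j) in IH by lia.
      specialize (IH ltac:(lia)). specialize (Hstep j ltac:(lia)).
      pose proof (pow_le r j ltac:(lra)).
      assert (0 <= b * (1 - r) * r ^ j) by (apply Rmult_le_pos; [apply Rmult_le_pos|]; lra).
      rewrite <- tech_pow_Rmult in IH.
      rewrite Hc in Hstep. nra. }
  intros j Hj. replace j with (n + 1 - (n + 1 - j))%nat by lia. apply Hback. lia.
Qed.

Fixpoint prefix_prod (w : nat -> C) (j : nat) : C :=
  match j with O => 1%C | S j' => Cmult (prefix_prod w j') (w j') end.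

(* Only products of two consecutive weights are small, hence the extra factor rho. *)
Lemma prefix_prod_geometric (w : nat -> C) (rho : R) (N : nat) : 0 < rho <= 1 ->
  (forall j, (j <= N)%nat -> Cmod (w j) <= 1) ->
  (forall j, (j < N)%nat -> Cmod (w j) * Cmod (w (S j)) <= rho ^ 2) ->
  forall j, (j <= N + 1)%nat -> rho * Cmod (prefix_prod w j) <= rho ^ j.
Proof.
  intros Hr Hw1 Hw2.
  assert (Hpair : forall j, ((j <= N + 1)%nat -> rho * Cmod (prefix_prod w j) <= rho ^ j) /\
                    ((S j <= N + 1)%nat -> rho * Cmod (prefix_prod w (S j)) <= rho ^ S j)).
  { induction j as [|j [IH1 IH2]]; split; try exact IH2; intros Hj; simpl prefix_prod.
    - rewrite Cmod_1. simpl. lra.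
    - rewrite Cmod_mult, Cmod_1. specialize (Hw1 0%nat ltac:(lia)). pose proof (Cmod_ge_0 (w 0%nat)). simpl. nra.
    - rewrite !Cmod_mult. specialize (IH1 ltac:(lia)). specialize (Hw2 j ltac:(lia)).
      pose proof (Cmod_ge_0 (w j)). pose proof (Cmod_ge_0 (w (S j))).
      pose proof (Cmod_ge_0 (prefix_prod w j)).
      replace (rho ^ S (S j)) with (rho ^ j * rho ^ 2) by (simpl; ring).
      apply Rle_trans with ((rho * Cmod (prefix_prod w j)) * (Cmod (w j) * Cmod (w (S j))));
        [right; ring | apply Rmult_le_compat; nra]. }
  intros j Hj. exact (proj1 (Hpair j) Hj).
Qed.

Lemma Cmod_prefix_prod_le_1 (w : nat -> C) (J : nat) :
  (forall l, (l < J)%nat -> Cmod (w l) <= 1) ->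
  forall j, (j <= J)%nat -> Cmod (prefix_prod w j) <= 1.
Proof.
  intros Hw j. induction j as [|j IH]; intros Hj; simpl.
  - rewrite Cmod_1. lra.
  - rewrite Cmod_mult. specialize (IH ltac:(lia)). specialize (Hw j ltac:(lia)).
    pose proof (Cmod_ge_0 (w j)). pose proof (Cmod_ge_0 (prefix_prod w j)). nra.
Qed.

Lemma Cmod_prefix_prod_sub_le (w1 w2 : nat -> C) (J : nat) (Om : R) :
  (forall l, (l < J)%nat ->
     Cmod (w1 l) <= 1 /\ Cmod (w2 l) <= 1 /\ Cmod (Cminus (w1 l) (w2 l)) <= Om) ->
  forall j, (j <= J)%nat -> Cmod (Cminus (prefix_prod w1 j) (prefix_prod w2 j)) <= INR j * Om.
Proof.
  intros Hw j. induction j as [|j IH]; intros Hj; simpl prefix_prod.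
  - replace (Cminus 1 1) with (RtoC 0) by (unfold Cminus; ring). rewrite Cmod_0. simpl. lra.
  - specialize (IH ltac:(lia)). destruct (Hw j ltac:(lia)) as [H1 [H2 H3]].
    assert (Hp1 : Cmod (prefix_prod w1 j) <= 1).
    { apply (Cmod_prefix_prod_le_1 w1 J); [intros l Hl; apply (Hw l Hl) | lia]. }
    replace (Cminus (Cmult (prefix_prod w1 j) (w1 j)) (Cmult (prefix_prod w2 j) (w2 j))) with
      (Cplus (Cmult (prefix_prod w1 j) (Cminus (w1 j) (w2 j)))
             (Cmult (Cminus (prefix_prod w1 j) (prefix_prod w2 j)) (w2 j)))
      by (unfold Cminus; ring).
    eapply Rle_trans; [apply Cmod_triangle|]. rewrite !Cmod_mult, S_INR.
    pose proof (Cmod_ge_0 (Cminus (w1 j) (w2 j))). pose proof (Cmod_ge_0 (prefix_prod w1 j)).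
    pose proof (Cmod_ge_0 (w2 j)).
    pose proof (Cmod_ge_0 (Cminus (prefix_prod w1 j) (prefix_prod w2 j))).
    nra.
Qed.

Lemma Cmod_prefix_prod_sub_mul_le (w1 w2 H : nat -> C) (L : nat) (Om M mu : R) :
  1 <= mu -> 0 <= M ->
  (forall l, (l < L)%nat ->
     Cmod (w1 l) <= 1 /\ Cmod (w2 l) <= 1 /\ Cmod (Cminus (w1 l) (w2 l)) <= Om) ->
  (forall j, (j < L)%nat -> Cmod (H j) <= M * mu ^ j) ->
  forall j, (j < L)%nat ->
    Cmod (Cminus (prefix_prod w1 j) (prefix_prod w2 j)) * Cmod (H j) <= INR L * Om * (M * mu ^ L).
Proof.
  intros Hmu HM Hw HH j Hj.
  pose proof (Cmod_prefix_prod_sub_le w1 w2 L Om Hw j ltac:(lia)).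
  assert (INR j <= INR L) by (apply le_INR; lia).
  assert (mu ^ j <= mu ^ L) by (apply Rle_pow; [lra | lia]).
  assert (0 <= Om).
  { apply Rle_trans with (Cmod (Cminus (w1 0%nat) (w2 0%nat))); [apply Cmod_ge_0 | apply Hw; lia]. }
  apply Rmult_le_compat; [apply Cmod_ge_0 | apply Cmod_ge_0 | |].
  - apply Rle_trans with (INR j * Om); [assumption | apply Rmult_le_compat_r; assumption].
  - apply Rle_trans with (M * mu ^ j); [apply HH, Hj | apply Rmult_le_compat_l; assumption].
Qed.

Section UnrolledRecursion.

Variables (F H w : nat -> C) (n : nat).
Hypothesis recursion : forall j, (j <= n)%nat -> F j = Cplus (H j) (Cmult (w j) (F (S j))).

Lemma prefix_prod_recursion (j : nat) : (j <= n)%nat ->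
  Cmult (prefix_prod w j) (F j) =
  Cplus (Cmult (prefix_prod w j) (H j)) (Cmult (prefix_prod w (S j)) (F (S j))).
Proof. intros Hj. rewrite (recursion j Hj). simpl. ring. Qed.

Lemma unrolled_tail_bound (rho mu M C0 : R) :
  0 < rho -> 1 <= mu -> rho * mu < 1 -> 0 <= M -> 0 <= C0 ->
  (forall j, (j <= n + 1)%nat -> rho * Cmod (prefix_prod w j) <= rho ^ j) ->
  (forall j, (j <= n)%nat -> Cmod (H j) <= M * mu ^ j) ->
  Cmod (F (S n)) <= C0 ->
  forall j, (j <= n + 1)%nat ->
    Cmod (Cmult (prefix_prod w j) (F j))
    <= (M / rho / (1 - rho * mu) + C0 / rho) * (rho * mu) ^ j.
Proof.
  intros Hr Hm Hrm HM HC0 HP HH HF.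
  assert (HPj : forall j, (j <= n + 1)%nat -> Cmod (prefix_prod w j) <= rho ^ j / rho).
  { intros j Hj. apply Rmult_le_reg_l with rho; [exact Hr|].
    replace (rho * (rho ^ j / rho)) with (rho ^ j) by (field; lra). apply HP, Hj. }
  apply (backward_geometric (fun j => Cmod (Cmult (prefix_prod w j) (F j))) n (M / rho) (C0 / rho)).
  - apply Rdiv_le_0_compat; lra.
  - apply Rdiv_le_0_compat; lra.
  - split; [apply Rmult_lt_0_compat|]; lra.
  - intros j Hj. rewrite (prefix_prod_recursion j Hj).
    eapply Rle_trans; [apply Cmod_triangle|]. apply Rplus_le_compat_r. rewrite Cmod_mult.
    apply Rle_trans with (rho ^ j / rho * (M * mu ^ j)).
    + apply Rmult_le_compat; [apply Cmod_ge_0 | apply Cmod_ge_0 | apply HPj; lia | apply HH, Hj].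
    + rewrite Rpow_mult_distr. right. field. lra.
  - rewrite Cmod_mult.
    apply Rle_trans with (rho ^ S n / rho * C0).
    + apply Rmult_le_compat; [apply Cmod_ge_0 | apply Cmod_ge_0 | apply HPj; lia | exact HF].
    + rewrite Rpow_mult_distr. pose proof (pow_R1_Rle mu (S n) Hm). pose proof (pow_lt rho (S n) Hr).
      replace (rho ^ S n / rho * C0) with (C0 / rho * rho ^ S n) by (field; lra).
      apply Rmult_le_compat_l; [apply Rdiv_le_0_compat; lra | nra].
Qed.

End UnrolledRecursion.

Lemma prefix_prod_sub_recursion (F1 H1 w1 F2 H2 w2 : nat -> C) (n1 n2 j : nat) :
  (forall j, (j <= n1)%nat -> F1 j = Cplus (H1 j) (Cmult (w1 j) (F1 (S j)))) ->
  (forall j, (j <= n2)%nat -> F2 j = Cplus (H2 j) (Cmult (w2 j) (F2 (S j)))) ->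
  (j <= n1)%nat -> (j <= n2)%nat ->
  Cminus (Cmult (prefix_prod w1 j) (F1 j)) (Cmult (prefix_prod w2 j) (F2 j)) =
  Cplus (Cplus (Cmult (prefix_prod w1 j) (Cminus (H1 j) (H2 j)))
               (Cmult (Cminus (prefix_prod w1 j) (prefix_prod w2 j)) (H2 j)))
        (Cminus (Cmult (prefix_prod w1 (S j)) (F1 (S j))) (Cmult (prefix_prod w2 (S j)) (F2 (S j)))).
Proof.
  intros Hrec1 Hrec2 Hj1 Hj2.
  rewrite (prefix_prod_recursion F1 H1 w1 n1 Hrec1 j Hj1), (prefix_prod_recursion F2 H2 w2 n2 Hrec2 j Hj2).
  unfold Cminus. ring.
Qed.

Lemma unrolled_sub_bound (F1 H1 w1 F2 H2 w2 : nat -> C) (n1 n2 L : nat) (rho eta1 Z : R) :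
  0 < rho < 1 -> 0 <= eta1 ->
  (forall j, (j <= n1)%nat -> F1 j = Cplus (H1 j) (Cmult (w1 j) (F1 (S j)))) ->
  (forall j, (j <= n2)%nat -> F2 j = Cplus (H2 j) (Cmult (w2 j) (F2 (S j)))) ->
  (L <= n1 + 1)%nat -> (L <= n2 + 1)%nat ->
  (forall j, (j < L)%nat -> Cmod (Cminus (H1 j) (H2 j)) <= eta1) ->
  (forall j, (j < L)%nat -> rho * Cmod (prefix_prod w1 j) <= rho ^ j) ->
  (forall j, (j < L)%nat ->
     Cmod (Cminus (prefix_prod w1 j) (prefix_prod w2 j)) * Cmod (H2 j) <= Z) ->
  Cmod (Cminus (F1 0%nat) (F2 0%nat)) <=
    eta1 / (rho * (1 - rho)) + INR L * Z
    + Cmod (Cmult (prefix_prod w1 L) (F1 L)) + Cmod (Cmult (prefix_prod w2 L) (F2 L)).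
Proof.
  intros Hr He Hrec1 Hrec2 HL1 HL2 HH HP HZ.
  set (D := fun j => Cminus (Cmult (prefix_prod w1 j) (F1 j)) (Cmult (prefix_prod w2 j) (F2 j))).
  assert (Hstep : forall j, (j < L)%nat ->
            Cmod (D j) <= rho ^ j / rho * eta1 + Z + Cmod (D (S j))).
  { intros j Hj. unfold D at 1.
    rewrite (prefix_prod_sub_recursion F1 H1 w1 F2 H2 w2 n1 n2 j Hrec1 Hrec2) by lia.
    eapply Rle_trans; [apply Cmod_triangle|]. fold (D (S j)).
    eapply Rle_trans; [apply Rplus_le_compat_r, Cmod_triangle|]. rewrite !Cmod_mult.
    specialize (HH j Hj). specialize (HP j Hj). specialize (HZ j Hj).
    pose proof (Cmod_ge_0 (prefix_prod w1 j)). pose proof (Cmod_ge_0 (Cminus (H1 j) (H2 j))).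
    assert (Cmod (prefix_prod w1 j) * Cmod (Cminus (H1 j) (H2 j)) <= rho ^ j / rho * eta1).
    { apply Rmult_le_compat; try assumption.
      apply Rmult_le_reg_l with rho; [lra|]. field_simplify; lra. }
    lra. }
  assert (Hsum : forall L', (L' <= L)%nat ->
    Cmod (D 0%nat) <= eta1 * (1 - rho ^ L') / (rho * (1 - rho)) + INR L' * Z + Cmod (D L')).
  { induction L' as [|L' IH]; intros HL'.
    - simpl. replace (eta1 * (1 - 1) / (rho * (1 - rho)) + 0 * Z) with 0 by (field; lra). lra.
    - specialize (IH ltac:(lia)). specialize (Hstep L' ltac:(lia)).
      assert (eta1 * (1 - rho ^ L') / (rho * (1 - rho)) + rho ^ L' / rho * eta1 =
              eta1 * (1 - rho ^ S L') / (rho * (1 - rho))) by (simpl; field; lra).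
      rewrite S_INR. lra. }
  replace (Cminus (F1 0%nat) (F2 0%nat)) with (D 0%nat) by (unfold D; simpl; unfold Cminus; ring).
  eapply Rle_trans; [apply (Hsum L (le_n L))|].
  assert (eta1 * (1 - rho ^ L) / (rho * (1 - rho)) <= eta1 / (rho * (1 - rho))).
  { unfold Rdiv. apply Rmult_le_compat_r; [left; apply Rinv_0_lt_compat; nra|].
    pose proof (pow_le rho L). nra. }
  assert (Cmod (D L) <= Cmod (Cmult (prefix_prod w1 L) (F1 L)) + Cmod (Cmult (prefix_prod w2 L) (F2 L))).
  { unfold D, Cminus. rewrite <- (Cmod_opp (Cmult (prefix_prod w2 L) (F2 L))). apply Cmod_triangle. }
  lra.
Qed.

Lemma chain_weight_prefix_geometric (k : C) (rho : R) (y : nat -> R) (n : nat) :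
  Re k <= 0 -> 0 < rho <= 1 -> Rpower (/ 2) (- Re k) <= rho ^ 2 -> cf_chain y n ->
  forall j, (j <= n + 1)%nat -> rho * Cmod (prefix_prod (chain_weight k y) j) <= rho ^ j.
Proof.
  intros Hk Hr Hrho Hc. apply (prefix_prod_geometric _ rho n Hr).
  - intros i Hi. apply (chain_weight_le_1 k y n); [exact Hk | exact Hc | lia].
  - intros i Hi. eapply Rle_trans; [apply (chain_weight_pair k y n) | exact Hrho];
      [exact Hk | exact Hc | lia].
Qed.

Lemma Cmod_f_chain_end (f : R -> C) (e : nat) (y : nat -> R) (n : nat) : cf_chain y n ->
  Cmod (f (chain_point e y (S n))) <= Cmod (f 1) + Cmod (f (-1)).
Proof.
  intros [_ [_ [_ Hend]]]. unfold chain_point. rewrite Hend, Rdiv_1_r.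
  pose proof (Cmod_ge_0 (f 1)). pose proof (Cmod_ge_0 (f (-1))).
  destruct (sign_cases (e + S n)) as [-> | ->]; lra.
Qed.

(** * Continued fraction expansions *)

(* The junk value 1 past the end of the expansion plays the role of y_(n+1) = 1 in
   [cf_chain]. *)
Definition cf_quot (x : R) (j : nat) : R :=
  match cf_rem x j with Some y => y | None => 1 end.

Lemma cf_rem_succ (x : R) (j : nat) : cf_rem x (S j) =
  match cf_rem x j with
  | None => None
  | Some y => if Req_EM_T (frac_part y) 0 then None else Some (/ frac_part y)
  end.
Proof. reflexivity. Qed.

Lemma cf_rem_none_add (x : R) (j d : nat) : cf_rem x j = None -> cf_rem x (j + d) = None.
Proof.
  intros H. induction d as [|d IH].
  - now rewrite Nat.add_0_r.
  - now rewrite Nat.add_succ_r, cf_rem_succ, IH.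
Qed.

Lemma cf_rem_some_le (x y : R) (n j : nat) : cf_rem x n = Some y -> (j <= n)%nat ->
  cf_rem x j = Some (cf_quot x j).
Proof.
  intros H Hj. unfold cf_quot. destruct (cf_rem x j) eqn:E; [reflexivity|].
  pose proof (cf_rem_none_add x j (n - j) E). replace (j + (n - j))%nat with n in * by lia.
  congruence.
Qed.

Lemma cf_rem_succ_gt_1 (x y : R) (j : nat) : cf_rem x (S j) = Some y -> 1 < y.
Proof.
  rewrite cf_rem_succ. destruct (cf_rem x j) as [z|]; [|discriminate].
  destruct (Req_EM_T (frac_part z) 0) as [E | E]; [discriminate|].
  intros H. inversion H. pose proof (frac_part_range z).
  rewrite <- Rinv_1. apply Rinv_lt_contravar; lra.
Qed.

Lemma is_rat_cf_rem (x y : R) (j : nat) : is_rat x -> cf_rem x j = Some y -> is_rat y.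
Proof.
  intros Hx. revert y. induction j as [|j IH]; intros y H.
  - simpl in H. inversion H. subst. exact Hx.
  - rewrite cf_rem_succ in H. destruct (cf_rem x j) as [z|]; [|discriminate].
    destruct (Req_EM_T (frac_part z) 0); [discriminate|]. inversion H.
    apply is_rat_inv, is_rat_frac_part, IH. reflexivity.
Qed.

Lemma cf_digit_quot (x : R) (j : nat) : cf_rem x j <> None -> cf_digit x j = Int_part (cf_quot x j).
Proof. intros H. unfold cf_digit, cf_quot. destruct (cf_rem x j); [reflexivity | contradiction]. Qed.

Lemma cf_len_spec (x : R) (n : nat) : cf_len x n ->
  (forall j, (j <= n)%nat -> cf_rem x j = Some (cf_quot x j)) /\
  (forall j, (j < n)%nat ->
     frac_part (cf_quot x j) <> 0 /\ cf_quot x (S j) = / frac_part (cf_quot x j)) /\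
  frac_part (cf_quot x n) = 0 /\ cf_quot x (S n) = 1.
Proof.
  intros [y [Hy Hf]].
  assert (Hs : forall j, (j <= n)%nat -> cf_rem x j = Some (cf_quot x j))
    by (intros j Hj; apply (cf_rem_some_le x y n j Hy Hj)).
  assert (Hn : cf_quot x n = y) by (unfold cf_quot; rewrite Hy; reflexivity).
  split; [exact Hs|]. split; [|split].
  - intros j Hj. pose proof (Hs (S j) Hj) as H1. rewrite cf_rem_succ, (Hs j ltac:(lia)) in H1.
    destruct (Req_EM_T (frac_part (cf_quot x j)) 0) as [E | E]; [discriminate|].
    split; [exact E|]. inversion H1. reflexivity.
  - rewrite Hn. exact Hf.
  - unfold cf_quot. rewrite cf_rem_succ, Hy.
    destruct (Req_EM_T (frac_part y) 0); [reflexivity | contradiction].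
Qed.

Lemma cf_digit_eq_Int_part (x : R) (n j : nat) : cf_len x n -> (j <= n)%nat ->
  cf_digit x j = Int_part (cf_quot x j).
Proof.
  intros Hc Hj. apply cf_digit_quot. rewrite (proj1 (cf_len_spec x n Hc) j Hj). discriminate.
Qed.

Lemma cf_quot_props (x : R) (n : nat) : is_rat x -> cf_len x n ->
  (forall j, (j <= n)%nat -> is_rat (cf_quot x j)) /\
  (forall j, (1 <= j <= n)%nat -> 1 < cf_quot x j) /\
  (forall j, (j < n)%nat -> frac_part (cf_quot x j) <> 0 /\
     cf_quot x (S j) = / frac_part (cf_quot x j) /\ frac_part (cf_quot x j) = / cf_quot x (S j)) /\
  frac_part (cf_quot x n) = 0 /\ cf_quot x (S n) = 1.
Proof.
  intros Hx Hc. destruct (cf_len_spec x n Hc) as [S1 [S2 [S3 S4]]].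
  split; [|split; [|split]]; auto.
  - intros j Hj. apply (is_rat_cf_rem x _ j Hx), S1, Hj.
  - intros [|j] Hj; [lia|]. apply (cf_rem_succ_gt_1 x _ j), S1. lia.
  - intros j Hj. destruct (S2 j Hj) as [H1 H2]. repeat split; [exact H1 | exact H2 |].
    rewrite H2, Rinv_inv. reflexivity.
Qed.

Lemma cf_quot_1_gt_2 (x : R) (n : nat) : is_rat x -> cf_len x n -> (2 <= n)%nat ->
  Int_part (cf_quot x 1) <> 1%Z -> 2 < cf_quot x 1.
Proof.
  intros Hx Hc Hn Hb. destruct (cf_quot_props x n Hx Hc) as [_ [R2 [R3 _]]].
  apply Int_part_ge_2; [pose proof (R2 1%nat ltac:(lia)); lra | exact Hb | apply (R3 1%nat); lia].
Qed.

Lemma cf_chain_tail (x : R) (n : nat) : is_rat x -> cf_len x n -> (1 <= n)%nat ->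
  cf_chain (fun j => cf_quot x (S j)) (n - 1).
Proof.
  intros Hx Hc Hn. destruct (cf_quot_props x n Hx Hc) as [R1 [R2 [R3 [R4 R5]]]].
  split; [|split; [|split]].
  - intros j Hj. split; [apply R1 | apply R2]; lia.
  - intros j Hj. destruct (R3 (S j) ltac:(lia)) as [? [? _]]. split; assumption.
  - replace (S (n - 1)) with n by lia. exact R4.
  - replace (S (S (n - 1))) with (S n) by lia. exact R5.
Qed.

(* [b_0; 1, b_2, b_3, ...] with x_1 / (x_1 - 1) = 1 + x_2 = [b_2 + 1; b_3, ...]. *)
Lemma cf_chain_unit_digit (x : R) (n : nat) : is_rat x -> cf_len x n -> (3 <= n)%nat ->
  Int_part (cf_quot x 1) = 1%Z ->
  cf_chain (fun j => match j with O => 1 + cf_quot x 2 | S _ => cf_quot x (j + 2) end) (n - 2).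
Proof.
  intros Hx Hc Hn Hb1. destruct (cf_quot_props x n Hx Hc) as [R1 [R2 [R3 [R4 R5]]]].
  split; [|split; [|split]].
  - intros [|j] Hj.
    + split; [apply is_rat_plus; [apply is_rat_1 | apply R1; lia]|].
      pose proof (R2 2%nat ltac:(lia)). lra.
    + split; [apply R1 | apply R2]; lia.
  - intros [|j] Hj.
    + rewrite Rplus_comm. change 1 with (IZR 1). rewrite (proj2 (Int_part_frac_part_add_IZR _ _)).
      destruct (R3 2%nat ltac:(lia)) as [? [? _]]. split; assumption.
    + replace (S (S j) + 2)%nat with (S (S j + 2)) by lia.
      destruct (R3 (S j + 2)%nat ltac:(lia)) as [? [? _]]. split; assumption.
  - destruct (n - 2)%nat as [|n'] eqn:En; [lia|].
    replace (S n' + 2)%nat with n by lia. exact R4.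
  - replace (S (n - 2) + 2)%nat with (S n) by lia. exact R5.
Qed.

(* [b_0; b_1, b_2, ...] with b_1 >= 2 and x_1 / (x_1 - 1) = [1; b_1 - 1, b_2, ...]. *)
Lemma cf_chain_large_digit (x : R) (n : nat) : is_rat x -> cf_len x n -> (3 <= n)%nat ->
  Int_part (cf_quot x 1) <> 1%Z ->
  cf_chain (fun j => match j with
                     | O => cf_quot x 1 / (cf_quot x 1 - 1)
                     | S O => cf_quot x 1 - 1
                     | _ => cf_quot x j end) n.
Proof.
  intros Hx Hc Hn Hb1. destruct (cf_quot_props x n Hx Hc) as [R1 [R2 [R3 [R4 R5]]]].
  pose proof (cf_quot_1_gt_2 x n Hx Hc ltac:(lia) Hb1) as Hy1.
  split; [|split; [|split]].
  - intros [|[|j]] Hj.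
    + split.
      * apply is_rat_mult; [apply R1; lia|].
        apply is_rat_inv, is_rat_minus; [apply R1; lia | apply is_rat_1].
      * apply Rmult_lt_reg_r with (cf_quot x 1 - 1); [lra|].
        unfold Rdiv. rewrite Rmult_assoc, Rinv_l by lra. lra.
    + split; [apply is_rat_minus; [apply R1; lia | apply is_rat_1] | lra].
    + split; [apply R1 | apply R2]; lia.
  - intros [|[|j]] Hj.
    + rewrite (proj2 (Int_part_frac_part_ratio _ Hy1)).
      split; [apply Rinv_neq_0_compat; lra | symmetry; apply Rinv_inv].
    + replace (cf_quot x 1 - 1) with (cf_quot x 1 + IZR (-1)) by (simpl; ring).
      rewrite (proj2 (Int_part_frac_part_add_IZR _ _)).
      destruct (R3 1%nat ltac:(lia)) as [? [? _]]. split; assumption.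
    + destruct (R3 (S (S j)) ltac:(lia)) as [? [? _]]. split; assumption.
  - destruct n as [|[|[|n]]]; [lia | lia | lia | exact R4].
  - destruct n as [|[|[|n]]]; [lia | lia | lia | exact R5].
Qed.

Definition start_sign (x : R) : nat := if Z_lt_dec (Int_part x) 0 then 1%nat else 0%nat.

(* For x >= 0 the recursion starts from f x = f (1 / x_1).  For x < 0 it starts from
   f x = f (1 / x_1 - 1) = f (- 1 / z) with z = x_1 / (x_1 - 1), whose complete quotients
   are read off the expansion of x as in the two lemmas above. *)
Definition start_chain (x : R) : nat -> R :=
  if Z_lt_dec (Int_part x) 0 then
    if Z.eq_dec (Int_part (cf_quot x 1)) 1 then
      fun j => match j with O => 1 + cf_quot x 2 | S _ => cf_quot x (j + 2) end
    else
      fun j => match j with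
               | O => cf_quot x 1 / (cf_quot x 1 - 1)
               | S O => cf_quot x 1 - 1
               | _ => cf_quot x j end
  else fun j => cf_quot x (S j).

Definition start_len (x : R) (n : nat) : nat :=
  if Z_lt_dec (Int_part x) 0 then
    if Z.eq_dec (Int_part (cf_quot x 1)) 1 then (n - 2)%nat else n
  else (n - 1)%nat.

Lemma start_chain_cf_chain (x : R) (n : nat) : is_rat x -> cf_len x n -> (3 <= n)%nat ->
  cf_chain (start_chain x) (start_len x n).
Proof.
  intros Hx Hc Hn. unfold start_chain, start_len.
  destruct (Z_lt_dec (Int_part x) 0); [destruct (Z.eq_dec (Int_part (cf_quot x 1)) 1)|].
  - apply cf_chain_unit_digit; assumption.
  - apply cf_chain_large_digit; assumption.
  - apply cf_chain_tail; [assumption | assumption | lia].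
Qed.

Lemma start_len_ge (x : R) (n : nat) : (n - 2 <= start_len x n)%nat.
Proof.
  unfold start_len. destruct (Z_lt_dec (Int_part x) 0);
    [destruct (Z.eq_dec (Int_part (cf_quot x 1)) 1)|]; lia.
Qed.

Lemma start_chain_Int_part_agree (x1 x2 : R) (n1 n2 m : nat) :
  is_rat x1 -> is_rat x2 -> cf_len x1 n1 -> cf_len x2 n2 ->
  (3 <= m)%nat -> (m <= n1)%nat -> (m <= n2)%nat ->
  (forall j, (j <= m)%nat -> Int_part (cf_quot x1 j) = Int_part (cf_quot x2 j)) ->
  start_sign x1 = start_sign x2 /\
  (forall j, (j < m - 2)%nat -> Int_part (start_chain x1 j) = Int_part (start_chain x2 j)).
Proof.
  intros Hx1 Hx2 Hc1 Hc2 Hm Hn1 Hn2 HI.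
  pose proof (HI 0%nat ltac:(lia)) as H0. pose proof (HI 1%nat ltac:(lia)) as H1.
  change (cf_quot x1 0) with x1 in H0. change (cf_quot x2 0) with x2 in H0.
  unfold start_sign, start_chain. rewrite H0, H1.
  destruct (Z_lt_dec (Int_part x2) 0) as [Hneg | Hpos]; split; try reflexivity.
  - destruct (Z.eq_dec (Int_part (cf_quot x2 1)) 1) as [Hb1 | Hb1]; intros [|[|j]] Hj;
      try (apply HI; lia).
    + rewrite !(Rplus_comm 1). change 1 with (IZR 1).
      rewrite !(proj1 (Int_part_frac_part_add_IZR _ _)), (HI 2%nat) by lia. reflexivity.
    + rewrite (proj1 (Int_part_frac_part_ratio _
        (cf_quot_1_gt_2 x1 n1 Hx1 Hc1 ltac:(lia) ltac:(rewrite H1; exact Hb1)))).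
      rewrite (proj1 (Int_part_frac_part_ratio _ (cf_quot_1_gt_2 x2 n2 Hx2 Hc2 ltac:(lia) Hb1))).
      reflexivity.
    + replace (cf_quot x1 1 - 1) with (cf_quot x1 1 + IZR (-1)) by (simpl; ring).
      replace (cf_quot x2 1 - 1) with (cf_quot x2 1 + IZR (-1)) by (simpl; ring).
      rewrite !(proj1 (Int_part_frac_part_add_IZR _ _)), H1. reflexivity.
  - intros j Hj. apply HI. lia.
Qed.

Lemma start_chain_le_quot (x : R) (n : nat) : is_rat x -> cf_len x n -> (3 <= n)%nat ->
  forall j, (j <= start_len x n)%nat -> exists i,
    (1 <= i)%nat /\ (i <= j + 2)%nat /\ (i <= n)%nat /\ start_chain x j <= cf_quot x i + 1.
Proof.
  intros Hx Hc Hn j Hj. destruct (cf_quot_props x n Hx Hc) as [_ [R2 [R3 _]]].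
  unfold start_len, start_chain in *.
  destruct (Z_lt_dec (Int_part x) 0) as [Hneg | Hpos].
  - destruct (Z.eq_dec (Int_part (cf_quot x 1)) 1) as [Hb1 | Hb1].
    { destruct j as [|j]; [exists 2%nat | exists (S j + 2)%nat]; repeat split; try lia; lra. }
    destruct j as [|[|j]].
    + exists 1%nat. repeat split; try lia.
      pose proof (cf_quot_1_gt_2 x n Hx Hc ltac:(lia) Hb1).
      apply Rle_trans with 2; [|lra].
      apply Rmult_le_reg_r with (cf_quot x 1 - 1); [lra|].
      unfold Rdiv. rewrite Rmult_assoc, Rinv_l by lra. lra.
    + exists 1%nat. repeat split; try lia. lra.
    + exists (S (S j)). repeat split; try lia. lra.
  - exists (S j). repeat split; try lia. lra.
Qed.

Lemma cf_quot_le_digit_bound (B x : R) (n i : nat) : inT B x -> cf_len x n -> (1 <= i <= n)%nat ->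
  cf_quot x i <= Rmax B (INR i * ln (INR i) ^ 2) + 1.
Proof.
  intros HT Hc Hi. destruct (cf_len_spec x n Hc) as [S1 _].
  assert (Hne : cf_rem x i <> None) by (rewrite (S1 i ltac:(lia)); discriminate).
  pose proof (HT i ltac:(lia) Hne) as H. rewrite cf_digit_quot in H by exact Hne.
  destruct (base_Int_part (cf_quot x i)). lra.
Qed.

Lemma mul_ln_sq_le_Rpower (t delta : R) : 1 <= t -> 0 < delta ->
  t * ln t ^ 2 <= 4 / (delta * delta) * Rpower t (1 + delta).
Proof.
  intros Ht Hd.
  pose proof (ln_le_Rpower_div t (delta / 2) ltac:(lra) ltac:(lra)).
  assert (0 <= ln t) by (rewrite <- ln_1; apply ln_le; lra).
  assert (Hsq : ln t ^ 2 <= (Rpower t (delta / 2) / (delta / 2)) ^ 2) by (apply pow_incr; lra).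
  replace ((Rpower t (delta / 2) / (delta / 2)) ^ 2) with (4 / (delta * delta) * Rpower t delta)
    in Hsq.
  2: { replace delta with (delta / 2 + delta / 2) at 3 by field.
       rewrite Rpower_plus. simpl. field. lra. }
  replace (Rpower t (1 + delta)) with (t * Rpower t delta)
    by (rewrite Rpower_plus, Rpower_1 by lra; reflexivity).
  assert (0 <= 4 / (delta * delta)) by (apply Rdiv_le_0_compat; nra).
  nra.
Qed.

Definition quotient_const (delta : R) : R := 3 + 4 / (delta * delta) * Rpower 3 (1 + delta).

Lemma quotient_const_ge_1 (delta : R) : 0 < delta -> 1 <= quotient_const delta.
Proof.
  intros. unfold quotient_const. pose proof (Rpower_pos 3 (1 + delta)).
  assert (0 <= 4 / (delta * delta)) by (apply Rdiv_le_0_compat; nra). nra.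
Qed.

Lemma digit_bound_le_quotient_const (delta : R) (m i j : nat) :
  0 < delta -> (1 <= m)%nat -> (1 <= i)%nat -> (i <= j + 2)%nat ->
  Rmax (Rpower (INR m) (1 + delta)) (INR i * ln (INR i) ^ 2) + 2
  <= quotient_const delta * Rpower (INR (m + j)) (1 + delta).
Proof.
  intros Hd Hm Hi Hij.
  assert (Hm1 : 1 <= INR m) by (apply (le_INR 1); exact Hm).
  assert (Hi1 : 1 <= INR i) by (apply (le_INR 1); exact Hi).
  assert (Hmj : INR m <= INR (m + j)) by (apply le_INR; lia).
  assert (Hij' : INR i <= 3 * INR (m + j)).
  { apply le_INR in Hij. rewrite plus_INR in *. simpl in Hij. pose proof (pos_INR j). lra. }
  set (P := Rpower (INR (m + j)) (1 + delta)).
  assert (HP1 : 1 <= P) by (apply Rpower_ge_1; lra).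
  assert (H1 : Rpower (INR m) (1 + delta) <= P) by (apply Rle_Rpower_l; lra).
  assert (Hc : 0 <= 4 / (delta * delta)) by (apply Rdiv_le_0_compat; nra).
  assert (H2 : INR i * ln (INR i) ^ 2 <= 4 / (delta * delta) * Rpower 3 (1 + delta) * P).
  { eapply Rle_trans; [apply mul_ln_sq_le_Rpower; [exact Hi1 | exact Hd]|].
    rewrite Rmult_assoc. apply Rmult_le_compat_l; [exact Hc|].
    unfold P. rewrite Rpower_mult_distr by lra. apply Rle_Rpower_l; lra. }
  pose proof (Rpower_pos 3 (1 + delta)).
  unfold quotient_const. apply Rmax_case_strong; intros; nra.
Qed.

Lemma start_chain_le_quotient_const (delta : R) (x : R) (n m : nat) : 0 < delta ->
  is_rat x -> inT (Rpower (INR m) (1 + delta)) x -> cf_len x n -> (3 <= m)%nat -> (m <= n)%nat ->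
  forall j, (j <= start_len x n)%nat ->
    start_chain x j <= quotient_const delta * Rpower (INR (m + j)) (1 + delta).
Proof.
  intros Hd Hx HT Hc Hm Hn j Hj.
  destruct (start_chain_le_quot x n Hx Hc ltac:(lia) j Hj) as [i [Hi1 [Hi2 [Hi3 Hi4]]]].
  pose proof (cf_quot_le_digit_bound _ x n i HT Hc ltac:(lia)).
  pose proof (digit_bound_le_quotient_const delta m i j Hd ltac:(lia) Hi1 Hi2). lra.
Qed.

(** * Periodicity and the functional equation *)

Section Periodicity.

Variable f : R -> C.
Hypothesis f_periodic : forall x, is_rat x -> ~ (-1 <= x <= 0) -> f x = f (x + 1).

Lemma f_add_nat (n : nat) (z : R) : is_rat z -> 0 < z -> f (z + INR n) = f z.
Proof.
  intros Hz Hz0. induction n as [|n IH].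
  - simpl. now rewrite Rplus_0_r.
  - rewrite S_INR, <- IH, <- Rplus_assoc. symmetry. apply f_periodic.
    + apply is_rat_plus; [exact Hz | apply is_rat_INR].
    + pose proof (pos_INR n). lra.
Qed.

Lemma f_sub_nat (n : nat) (z : R) : is_rat z -> z < 0 -> f (z - INR n) = f z.
Proof.
  intros Hz Hz0. induction n as [|n IH].
  - simpl. now rewrite Rminus_0_r.
  - rewrite <- IH, S_INR. replace (z - INR n) with (z - (INR n + 1) + 1) by ring.
    apply f_periodic.
    + apply is_rat_minus; [exact Hz | apply is_rat_plus; [apply is_rat_INR | apply is_rat_1]].
    + pose proof (pos_INR n). lra.
Qed.

Lemma f_gt_1 (y : R) : is_rat y -> 1 < y ->
  f y = if Req_EM_T (frac_part y) 0 then f 1 else f (frac_part y).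
Proof.
  intros Hy Hy1. destruct (Req_EM_T (frac_part y) 0) as [E | E].
  - rewrite (integer_decomp y) by lra. apply f_add_nat; [apply is_rat_1 | lra].
  - rewrite (nat_part_decomp y) at 1 by lra. apply f_add_nat.
    + apply is_rat_frac_part, Hy.
    + pose proof (frac_part_range y). lra.
Qed.

Lemma f_lt_m1 (y : R) : is_rat y -> 1 < y ->
  f (- y) = if Req_EM_T (frac_part y) 0 then f (-1) else f (- frac_part y).
Proof.
  intros Hy Hy1. destruct (Req_EM_T (frac_part y) 0) as [E | E].
  - rewrite (integer_decomp y) by lra. rewrite Ropp_plus_distr.
    apply f_sub_nat; [apply is_rat_opp, is_rat_1 | lra].
  - rewrite (nat_part_decomp y) at 1 by lra. rewrite Ropp_plus_distr.
    apply f_sub_nat.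
    + apply is_rat_opp, is_rat_frac_part, Hy.
    + pose proof (frac_part_range y). lra.
Qed.

Lemma f_chain_step (i : nat) (y : nat -> R) (n j : nat) : cf_chain y n -> (j <= n)%nat ->
  f ((-1) ^ i * y j) = f ((-1) ^ i / y (S j)).
Proof.
  intros [Hc1 [Hc2 [Hc3 Hc4]]] Hj. destruct (Hc1 j Hj) as [Hyr Hy1].
  assert (Hnext : / y (S j) = if Req_EM_T (frac_part (y j)) 0 then 1 else frac_part (y j)).
  { destruct (Nat.lt_ge_cases j n) as [Hlt | Hge].
    - destruct (Hc2 j Hlt) as [Hf ->]. destruct Req_EM_T; [contradiction|]. apply Rinv_inv.
    - assert (j = n) as -> by lia. destruct Req_EM_T; [| contradiction].
      rewrite Hc4. apply Rinv_1. }
  unfold Rdiv. rewrite Hnext.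
  destruct (sign_cases i) as [-> | ->].
  - rewrite Rmult_1_l, f_gt_1 by assumption.
    destruct Req_EM_T; f_equal; ring.
  - replace (-1 * y j) with (- y j) by ring. rewrite f_lt_m1 by assumption.
    destruct Req_EM_T; f_equal; ring.
Qed.

Lemma f_start_point (x : R) (n : nat) : is_rat x -> cf_len x n -> (3 <= n)%nat ->
  f x = f (chain_point (start_sign x) (start_chain x) 0).
Proof.
  intros Hx Hc Hn. destruct (cf_quot_props x n Hx Hc) as [_ [R2 [R3 _]]].
  destruct (R3 0%nat ltac:(lia)) as [Hf0 [_ Hfx]]. change (cf_quot x 0) with x in Hf0, Hfx.
  pose proof (frac_part_range x). pose proof (Rplus_Int_part_frac_part x).
  assert (Hxr : is_rat (frac_part x)) by (apply is_rat_frac_part, Hx).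
  pose proof (R2 1%nat ltac:(lia)).
  unfold chain_point, start_sign, start_chain. rewrite Nat.add_0_r.
  destruct (Z_lt_dec (Int_part x) 0) as [Hneg | Hpos].
  - assert (Ex : x = (frac_part x - 1) - INR (Z.to_nat (- Int_part x - 1))).
    { rewrite INR_IZR_INZ, Znat.Z2Nat.id, minus_IZR, opp_IZR by lia. simpl. lra. }
    rewrite Ex at 1. rewrite f_sub_nat;
      [| apply is_rat_minus; [exact Hxr | apply is_rat_1] | lra].
    rewrite Hfx. simpl pow. f_equal.
    destruct (Z.eq_dec (Int_part (cf_quot x 1)) 1) as [Hb1 | Hb1].
    + destruct (R3 1%nat ltac:(lia)) as [_ [_ Hf1]].
      pose proof (Rplus_Int_part_frac_part (cf_quot x 1)) as Hq1. rewrite Hb1, Hf1 in Hq1.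
      pose proof (R2 2%nat ltac:(lia)).
      rewrite Hq1. simpl. field. split; lra.
    + field. split; lra.
  - assert (Ex : x = frac_part x + INR (Z.to_nat (Int_part x))).
    { rewrite INR_IZR_INZ, Znat.Z2Nat.id by lia. lra. }
    rewrite Ex at 1. rewrite f_add_nat; [| exact Hxr | lra].
    rewrite Hfx. simpl pow. f_equal. field. lra.
Qed.

End Periodicity.

Section FunctionalEquation.

Variables (k : C) (f h : R -> C).
Hypothesis f_periodic : forall x, is_rat x -> ~ (-1 <= x <= 0) -> f x = f (x + 1).
Hypothesis h_def : forall x, is_rat x -> x <> 0 -> -1 <= x <= 1 ->
  h x = Cminus (f x) (Cmult (rpow_c (Rabs x) (Copp k)) (f (- / x))).

Lemma chain_recursion (e : nat) (y : nat -> R) (n j : nat) : cf_chain y n -> (j <= n)%nat ->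
  f (chain_point e y j) =
  Cplus (h (chain_point e y j)) (Cmult (chain_weight k y j) (f (chain_point e y (S j)))).
Proof.
  intros Hc Hj. destruct (proj1 Hc j Hj) as [Hyr Hy1].
  assert (Hx : is_rat (chain_point e y j)) by (apply is_rat_mult; [apply is_rat_sign | apply is_rat_inv, Hyr]).
  rewrite (h_def _ Hx (chain_point_neq_0 e y j ltac:(lra)) (chain_point_in_unit e y j ltac:(lra))).
  rewrite Rabs_chain_point by lra.
  replace (- / chain_point e y j) with ((-1) ^ (e + S j) * y j).
  2: { unfold chain_point. rewrite Nat.add_succ_r. simpl.
       destruct (sign_cases (e + j)) as [-> | ->]; field; lra. }
  rewrite (f_chain_step f f_periodic _ y n j Hc Hj).
  unfold chain_weight, chain_point. rewrite Nat.add_succ_r. unfold Cminus. ring.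
Qed.

(* The three terms account for the paired values of h, for the discrepancy between the
   products of weights, and for the two remainders after L steps. *)
Lemma chains_f_sub_bound (rho mu : R) (e : nat) (y1 y2 : nat -> R) (n1 n2 L : nat)
    (M Y dist eta1 : R) :
  Re k <= 0 -> 0 < rho < 1 -> 1 <= mu -> rho * mu < 1 -> Rpower (/ 2) (- Re k) <= rho ^ 2 ->
  cf_chain y1 n1 -> cf_chain y2 n2 -> (L <= n1)%nat -> (L <= n2)%nat -> 0 <= M -> 0 <= eta1 ->
  (forall j, (j <= n1)%nat -> Cmod (h (chain_point e y1 j)) <= M * mu ^ j) ->
  (forall j, (j <= n2)%nat -> Cmod (h (chain_point e y2 j)) <= M * mu ^ j) ->
  (forall j, (j < L)%nat -> y1 j <= Y /\ y2 j <= Y) ->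
  (forall j, (j < L)%nat -> Rabs (/ y1 j - / y2 j) <= dist) ->
  (forall j, (j < L)%nat ->
     Cmod (Cminus (h (chain_point e y1 j)) (h (chain_point e y2 j))) <= eta1) ->
  Cmod (Cminus (f (chain_point e y1 0)) (f (chain_point e y2 0))) <=
    eta1 / (rho * (1 - rho))
    + INR L * (INR L * (2 * (- Re k + Rabs (Im k)) * (dist * Y)) * (M * mu ^ L))
    + 2 * ((M / rho / (1 - rho * mu) + (Cmod (f 1) + Cmod (f (-1))) / rho) * (rho * mu) ^ L).
Proof.
  intros Hk Hrho Hmu Hrm Hrho2 Hc1 Hc2 HL1 HL2 HM He HH1 HH2 HY Hdist Hmod.
  set (F1 := fun j => f (chain_point e y1 j)). set (F2 := fun j => f (chain_point e y2 j)).
  set (H1 := fun j => h (chain_point e y1 j)). set (H2 := fun j => h (chain_point e y2 j)).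
  set (w1 := chain_weight k y1). set (w2 := chain_weight k y2).
  set (C0 := Cmod (f 1) + Cmod (f (-1))).
  assert (HC0 : 0 <= C0) by (pose proof (Cmod_ge_0 (f 1)); pose proof (Cmod_ge_0 (f (-1))); unfold C0; lra).
  assert (Hrec1 : forall j, (j <= n1)%nat -> F1 j = Cplus (H1 j) (Cmult (w1 j) (F1 (S j))))
    by (intros j Hj; apply (chain_recursion e y1 n1 j Hc1 Hj)).
  assert (Hrec2 : forall j, (j <= n2)%nat -> F2 j = Cplus (H2 j) (Cmult (w2 j) (F2 (S j))))
    by (intros j Hj; apply (chain_recursion e y2 n2 j Hc2 Hj)).
  pose proof (chain_weight_prefix_geometric k rho y1 n1 Hk ltac:(lra) Hrho2 Hc1) as HP1.
  pose proof (chain_weight_prefix_geometric k rho y2 n2 Hk ltac:(lra) Hrho2 Hc2) as HP2.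
  pose proof (unrolled_tail_bound F1 H1 w1 n1 Hrec1 rho mu M C0 ltac:(lra) Hmu Hrm HM HC0 HP1 HH1
                (Cmod_f_chain_end f e y1 n1 Hc1) L ltac:(lia)) as Htail1.
  pose proof (unrolled_tail_bound F2 H2 w2 n2 Hrec2 rho mu M C0 ltac:(lra) Hmu Hrm HM HC0 HP2 HH2
                (Cmod_f_chain_end f e y2 n2 Hc2) L ltac:(lia)) as Htail2.
  set (Om := 2 * (- Re k + Rabs (Im k)) * (dist * Y)).
  pose proof (chain_weights_close k y1 y2 n1 n2 L Y dist Hk Hc1 Hc2 HL1 HL2 HY Hdist) as Hw.
  pose proof (Cmod_prefix_prod_sub_mul_le w1 w2 H2 L Om M mu Hmu HM Hw
                (fun j Hj => HH2 j ltac:(lia))) as HZ.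
  pose proof (unrolled_sub_bound F1 H1 w1 F2 H2 w2 n1 n2 L rho eta1 (INR L * Om * (M * mu ^ L))
    Hrho He Hrec1 Hrec2 ltac:(lia) ltac:(lia) Hmod (fun j Hj => HP1 j ltac:(lia)) HZ).
  unfold Om in *. unfold F1, F2, C0 in *. lra.
Qed.

Lemma chains_f_sub_at_scale (delta rho mu M Y eps0 eta1 : R) (e : nat) (y1 y2 : nat -> R)
    (n1 n2 N0 m : nat) :
  Re k <= 0 -> 0 < rho < 1 -> 1 <= mu -> rho * mu < 1 -> Rpower (/ 2) (- Re k) <= rho ^ 2 ->
  0 <= M -> 0 <= eta1 ->
  (forall eps, 0 < eps < eps0 -> forall x y, x <> 0 -> y <> 0 ->
     Rabs (x - y) < exp (- Rpower eps (delta - 1)) -> Rabs x > 2 * eps ->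
     Cmod (Cminus (h x) (h y)) <= eta1) ->
  / (4 * Y) < eps0 -> 2 * ln 2 - ln 2 / 2 * INR m < - Rpower (/ (4 * Y)) (delta - 1) ->
  (4 <= m)%nat -> cf_chain y1 n1 -> cf_chain y2 n2 ->
  (N0 <= n1)%nat -> (N0 <= n2)%nat -> (m <= N0 + 2)%nat ->
  (forall j, (j < N0)%nat -> Int_part (y1 j) = Int_part (y2 j)) ->
  (forall j, (j <= n1)%nat -> Cmod (h (chain_point e y1 j)) <= M * mu ^ j) ->
  (forall j, (j <= n2)%nat -> Cmod (h (chain_point e y2 j)) <= M * mu ^ j) ->
  (forall j, (j < m / 2)%nat -> y1 j <= Y /\ y2 j <= Y) ->
  Cmod (Cminus (f (chain_point e y1 0)) (f (chain_point e y2 0))) <=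
    eta1 / (rho * (1 - rho))
    + INR (m / 2) * (INR (m / 2) * (2 * (- Re k + Rabs (Im k))
        * (exp (2 * ln 2 - ln 2 / 2 * INR m) * Y)) * (M * mu ^ (m / 2)))
    + 2 * ((M / rho / (1 - rho * mu) + (Cmod (f 1) + Cmod (f (-1))) / rho)
           * (rho * mu) ^ (m / 2)).
Proof.
  intros Hk Hrho Hmu Hrm Hrho2 HM He Hmod Heps Hexp Hm Hc1 Hc2 HN1 HN2 HmN HI HH1 HH2 HY.
  destruct (INR_half_bounds m Hm) as [HL1 [_ HL3]].
  assert (Hdist : forall j, (j < m / 2)%nat ->
            Rabs (/ y1 j - / y2 j) <= exp (2 * ln 2 - ln 2 / 2 * INR m)).
  { intros j Hj. apply (inv_quotients_close y1 y2 n1 n2 N0 m); try assumption.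
    assert (INR (S j) <= INR (m / 2)) by (apply le_INR; lia). rewrite S_INR in *. lra. }
  apply (chains_f_sub_bound rho mu e y1 y2 n1 n2 (m / 2) M Y _ eta1); try assumption; try lia.
  intros j Hj. destruct (HY j Hj).
    apply (h_modulus_at_scale h delta eps0 eta1 Y (exp (2 * ln 2 - ln 2 / 2 * INR m)) e y1 y2 j Hmod Heps);
      [apply exp_increasing, Hexp | apply (proj1 Hc1); lia | assumption
      | apply (proj1 Hc2); lia | assumption | apply Hdist, Hj].
Qed.

(* Unrolling m/2 steps, the quotients met are at most Y = A (2m)^(1+delta) and the modulus of
   continuity of h is used at scale 1/(4Y). *)
Lemma chains_f_sub_eventually_small (delta K A : R) :
  Re k < 0 -> 0 < delta -> 1 <= A ->
  (forall eta, 0 < eta -> exists eps0, 0 < eps0 /\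
     forall eps, 0 < eps < eps0 -> forall x y, x <> 0 -> y <> 0 ->
       Rabs (x - y) < exp (- Rpower eps (delta - 1)) -> Rabs x > 2 * eps ->
       Cmod (Cminus (h x) (h y)) <= eta) ->
  (forall x, x <> 0 -> -1 <= x <= 1 -> Cmod (h x) <= K * exp (Rpower (Rabs x) (delta - 1))) ->
  forall eta, 0 < eta -> exists M0 : nat, forall m : nat, (M0 <= m)%nat ->
  forall (e : nat) (y1 y2 : nat -> R) (n1 n2 N0 : nat),
  cf_chain y1 n1 -> cf_chain y2 n2 -> (N0 <= n1)%nat -> (N0 <= n2)%nat -> (m <= N0 + 2)%nat ->
  (forall j, (j < N0)%nat -> Int_part (y1 j) = Int_part (y2 j)) ->
  (forall j, (j <= n1)%nat -> y1 j <= A * Rpower (INR (m + j)) (1 + delta)) ->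
  (forall j, (j <= n2)%nat -> y2 j <= A * Rpower (INR (m + j)) (1 + delta)) ->
  Cmod (Cminus (f (chain_point e y1 0)) (f (chain_point e y2 0))) <= eta.
Proof.
  intros Hk Hd HA Hmod Hbd eta Heta.
  destruct (decay_rates k Hk) as [rho [mu [Hrho [Hmu [Hrm Hrho2]]]]].
  destruct (theta_range delta Hd) as [Hth Hg].
  set (g := (1 + delta) * theta delta) in *.
  set (Ath := Rpower A (theta delta) * Rpower 2 g).
  assert (HAth : 0 <= Ath) by (left; apply Rmult_lt_0_compat; apply Rpower_pos).
  assert (Hlnmu : 0 < ln mu) by (rewrite <- ln_1; apply ln_increasing; lra).
  destruct (Rpower_sublinear_bound g Ath (ln mu) Hg HAth Hlnmu) as [C1 [HC1 Hgrowth]].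
  set (K' := Rmax K 1). assert (HK' : 1 <= K') by apply Rmax_r.
  set (Lk := 2 * (- Re k + Rabs (Im k))).
  assert (HLk : 0 <= Lk) by (unfold Lk; pose proof (Rabs_pos (Im k)); lra).
  set (C0 := Cmod (f 1) + Cmod (f (-1))).
  assert (HC0 : 0 <= C0) by (pose proof (Cmod_ge_0 (f 1)); pose proof (Cmod_ge_0 (f (-1))); unfold C0; lra).
  set (eta1 := eta / 2 * (rho * (1 - rho))).
  assert (He1 : 0 < eta1) by (unfold eta1; apply Rmult_lt_0_compat; nra).
  destruct (Hmod eta1 He1) as [eps0 [Heps0 Hmod']].
  destruct (modulus_scale_eventually A delta eps0 HA Hd Heps0) as [N1 HN1].
  destruct (weight_term_eventually_small Lk A delta K' C1 Ath g mu (eta / 4)) as [N2 HN2]; try lra.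
  destruct (tail_term_eventually_small rho (rho * mu) K' C1 Ath g C0 (eta / 4)) as [N3 HN3]; try nra.
  exists (Nat.max 4 (Nat.max N1 (Nat.max N2 N3))).
  intros m Hm e y1 y2 n1 n2 N0 Hc1 Hc2 HN01 HN02 HmN HI Hy1 Hy2.
  destruct (HN1 m ltac:(lia)) as [Heps Hexp].
  destruct (INR_half_bounds m ltac:(lia)) as [HL1 [HL2 HL3]].
  specialize (HN2 m ltac:(lia) (m / 2)%nat HL1). specialize (HN3 m ltac:(lia) (m / 2)%nat HL2).
  set (M := K' * exp (Ath * Rpower (INR m) g + C1)).
  assert (HM : 0 <= M) by (unfold M; pose proof (exp_pos (Ath * Rpower (INR m) g + C1)); nra).
  assert (HH : forall y n, cf_chain y n ->
            (forall j, (j <= n)%nat -> y j <= A * Rpower (INR (m + j)) (1 + delta)) ->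
            forall j, (j <= n)%nat -> Cmod (h (chain_point e y j)) <= M * mu ^ j).
  { intros y n Hc Hy. apply (h_chain_point_geometric h K delta A mu C1 e y n m); auto; lra || lia. }
  pose proof (chains_f_sub_at_scale delta rho mu M (A * Rpower (2 * INR m) (1 + delta)) eps0 eta1
    e y1 y2 n1 n2 N0 m ltac:(lra) Hrho ltac:(lra) Hrm Hrho2 HM ltac:(lra) Hmod' Heps Hexp
    ltac:(lia) Hc1 Hc2 HN01 HN02 HmN HI (HH y1 n1 Hc1 Hy1) (HH y2 n2 Hc2 Hy2)) as Hfixed.
  assert (Hscale : forall j, (j < m / 2)%nat ->
    y1 j <= A * Rpower (2 * INR m) (1 + delta) /\ y2 j <= A * Rpower (2 * INR m) (1 + delta)).
  { intros j Hj. pose proof (Rpower_add_le_double m j (1 + delta) ltac:(lra) ltac:(lia) ltac:(lia)).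
    split; [eapply Rle_trans; [apply Hy1; lia|] | eapply Rle_trans; [apply Hy2; lia|]];
      apply Rmult_le_compat_l; lra. }
  specialize (Hfixed Hscale). fold Lk C0 in Hfixed. unfold M in Hfixed.
  assert (eta1 / (rho * (1 - rho)) = eta / 2) by (unfold eta1; field; nra).
  lra.
Qed.

End FunctionalEquation.

Theorem lemma2p4 (k : C) (delta : R) (f h : R -> C) :
  Re k < 0 -> 0 < delta ->
  (forall x, is_rat x -> ~ (-1 <= x <= 0) -> f x = f (x + 1)) ->
  (forall x, is_rat x -> x <> 0 -> -1 <= x <= 1 ->
     h x = Cminus (f x) (Cmult (rpow_c (Rabs x) (Copp k)) (f (- / x)))) ->
  (forall eta, 0 < eta -> exists eps0, 0 < eps0 /\
     forall eps, 0 < eps < eps0 -> forall x y, x <> 0 -> y <> 0 ->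
       Rabs (x - y) < exp (- Rpower eps (delta - 1)) -> Rabs x > 2 * eps ->
       Cmod (Cminus (h x) (h y)) <= eta) ->
  (exists K, forall x, x <> 0 -> -1 <= x <= 1 ->
     Cmod (h x) <= K * exp (Rpower (Rabs x) (delta - 1))) ->
  propS (1 + delta) f.
Proof.
  intros Hk Hd Hper Hrel Hmod [K Hbd] eta Heta.
  destruct (chains_f_sub_eventually_small k f h Hper Hrel delta K (quotient_const delta)
              Hk Hd (quotient_const_ge_1 delta Hd) Hmod Hbd eta Heta) as [M0 HM0].
  exists (Nat.max M0 3). intros m Hm x x1 x2 _ [Hr1 [HT1 [[n1 [Hn1 Hc1]] Hd1]]]
                                       [Hr2 [HT2 [[n2 [Hn2 Hc2]] Hd2]]].
  rewrite (f_start_point f Hper x1 n1), (f_start_point f Hper x2 n2) by (assumption || lia).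
  assert (HI : forall j, (j <= m)%nat -> Int_part (cf_quot x1 j) = Int_part (cf_quot x2 j)).
  { intros j Hj.
    rewrite <- (cf_digit_eq_Int_part x1 n1 j Hc1), <- (cf_digit_eq_Int_part x2 n2 j Hc2) by lia.
    rewrite Hd1, Hd2 by exact Hj. reflexivity. }
  destruct (start_chain_Int_part_agree x1 x2 n1 n2 m Hr1 Hr2 Hc1 Hc2 ltac:(lia) Hn1 Hn2 HI)
    as [Hsign HIstart].
  rewrite <- Hsign.
  apply (HM0 m ltac:(lia) _ _ _ (start_len x1 n1) (start_len x2 n2) (m - 2)%nat).
  - apply start_chain_cf_chain; [assumption | assumption | lia].
  - apply start_chain_cf_chain; [assumption | assumption | lia].
  - pose proof (start_len_ge x1 n1). lia.
  - pose proof (start_len_ge x2 n2). lia.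
  - lia.
  - exact HIstart.
  - apply start_chain_le_quotient_const; [assumption .. | lia | lia].
  - apply start_chain_le_quotient_const; [assumption .. | lia | lia].
Qed.
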